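(* Let $D\subset\mathbb{C}$ be a connected domain and let $f,g$ be non-constant meromorphic functions on $D$ with the same phase, i.e. $f(z)/|f(z)|=g(z)/|g(z)|$ at all points of $D$ that are neither zeros nor poles of $f$ or $g$. Then the following are equivalent: (i) $f\neq g$; (ii) there exists $c\in\mathbb{C}\setminus\{0\}$ such that the phases of $f+c$ and $g+c$ are not equal (as functions on the set of points of $D$ where both are defined); (iii) for every $c\in\mathbb{C}\setminus\{0\}$ the phases of $f+c$ and $g+c$ are not equal (as functions on the set of points of $D$ where both are defined).
   Context: For a meromorphic function $h$ on $D$, its phase is $z\mapsto h(z)/|h(z)|$, defined on the set of points of $D$ where $h(z)\in\mathbb{C}\setminus\{0\}$. *)

From Stdlib Require Import Reals.
Open Scope R_scope.

Definition Cx : Type := (R * R)%type.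

Definition C0 : Cx := (0, 0).
Definition Cadd (z w : Cx) : Cx := (fst z + fst w, snd z + snd w).
Definition Copp (z : Cx) : Cx := (- fst z, - snd z).
Definition Csub (z w : Cx) : Cx := Cadd z (Copp w).
Definition Cmul (z w : Cx) : Cx :=
  (fst z * fst w - snd z * snd w, fst z * snd w + snd z * fst w).
Definition Cinv (z : Cx) : Cx :=
  let d := fst z * fst z + snd z * snd z in (fst z / d, - snd z / d).
Definition Cdiv (z w : Cx) : Cx := Cmul z (Cinv w).
Definition Cmod (z : Cx) : R := sqrt (fst z * fst z + snd z * snd z).
Definition Cscale (r : R) (z : Cx) : Cx := (r * fst z, r * snd z).

Definition Cdifferentiable (f : Cx -> Cx) (z : Cx) : Prop :=
  exists l : Cx, forall eps, 0 < eps -> exists delta, 0 < delta /\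
    forall w, w <> z -> Cmod (Csub w z) < delta ->
      Cmod (Csub (Cdiv (Csub (f w) (f z)) (Csub w z)) l) < eps.

Definition Copen (D : Cx -> Prop) : Prop :=
  forall z, D z -> exists r, 0 < r /\ forall w, Cmod (Csub w z) < r -> D w.

Definition Cdomain (D : Cx -> Prop) : Prop :=
  Copen D /\ (exists z, D z) /\
  forall U V : Cx -> Prop, Copen U -> Copen V ->
    (forall z, D z -> U z \/ V z) ->
    (forall z, D z -> U z -> V z -> False) ->
    (exists z, D z /\ U z) -> (exists z, D z /\ V z) -> False.

Definition pole (f : Cx -> Cx) (p : Cx) : Prop :=
  forall M : R, exists delta, 0 < delta /\
    forall w, w <> p -> Cmod (Csub w p) < delta -> M < Cmod (f w).

(* f is meromorphic on D: at each point of D it is either complex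
   differentiable or has a pole, and the poles are isolated in D.
   (The value of f at a pole is irrelevant.) *)
Definition meromorphic (D : Cx -> Prop) (f : Cx -> Cx) : Prop :=
  (forall z, D z -> Cdifferentiable f z \/ pole f z) /\
  (forall z, D z -> exists r, 0 < r /\
     forall w, w <> z -> Cmod (Csub w z) < r -> ~ pole f w).

(* phase of h at z (meaningful where h z is finite and nonzero) *)
Definition phase (h : Cx -> Cx) (z : Cx) : Cx := Cscale (/ Cmod (h z)) (h z).

Definition same_phase (D : Cx -> Prop) (h1 h2 : Cx -> Cx) : Prop :=
  forall z, D z -> ~ pole h1 z -> ~ pole h2 z -> h1 z <> C0 -> h2 z <> C0 ->
    phase h1 z = phase h2 z.

Definition nonconstant_on (D : Cx -> Prop) (f : Cx -> Cx) : Prop :=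
  ~ exists c : Cx, forall z, D z -> f z = c.

Definition mero_eq (D : Cx -> Prop) (f g : Cx -> Cx) : Prop :=
  forall z, D z -> (pole f z <-> pole g z) /\ (~ pole f z -> f z = g z).

Definition Cshift (h : Cx -> Cx) (c : Cx) : Cx -> Cx := fun z => Cadd (h z) c.

(* If [f <> g], take a point where both are finite and differ, and a shift [c] that makes
   [f + c] and [g + c] point in different directions there; equal functions have equal shifted
   phases. The substance is that [f <> g] excludes [f + c], [g + c] having the same phase for any
   [c <> 0]. Where [f], [g], [f + c], [g + c] are finite and nonzero and [f <> g], the two phase
   conditions force [f] onto the real line through [c]. Near a point where [f <> g], either [f]
   stays on that line on a whole disc, and is constant there by the Cauchy–Riemann equations,
   or [f] leaves the line at some [w0], and then [g] only takes the values [0] and [-c] near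
   [w0], so [g] is locally constant. In both cases the identity theorem makes [f] or [g]
   constant on the domain. *)

From Stdlib Require Import Reals Lra Lia Psatz Classical ClassicalEpsilon FunctionalExtensionality Wf_nat.
Open Scope R_scope.

Definition Cone : Cx := (1, 0).
Definition Ci : Cx := (0, 1).
Definition RC (r : R) : Cx := (r, 0).

Lemma Cx_eq (z w : Cx) : fst z = fst w -> snd z = snd w -> z = w.
Proof. destruct z, w; simpl; intros; subst; reflexivity. Qed.

Lemma Cpair_eq (a b c d : R) : (a, b) = (c, d) <-> a = c /\ b = d.
Proof. split; intros H; [injection H; auto | destruct H; subst; auto]. Qed.

Lemma C_ring_theory : ring_theory C0 Cone Cadd Cmul Csub Copp (@eq Cx).
Proof.
  constructor; intros; apply Cx_eq; unfold Cadd, Cmul, Csub, Copp, C0, Cone; simpl; ring.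
Qed.

Lemma Cone_neq_C0 : Cone <> C0.
Proof. intro H; injection H; lra. Qed.

Lemma Cnorm2_pos (z : Cx) : z <> C0 -> 0 < fst z * fst z + snd z * snd z.
Proof.
  destruct z as [a b]; simpl; intros H.
  destruct (Req_dec a 0), (Req_dec b 0); subst; try nra.
  exfalso; apply H; reflexivity.
Qed.

Lemma C_field_theory : field_theory C0 Cone Cadd Cmul Csub Copp Cdiv Cinv (@eq Cx).
Proof.
  constructor.
  - exact C_ring_theory.
  - exact Cone_neq_C0.
  - reflexivity.
  - intros p Hp. pose proof (Cnorm2_pos p Hp).
    destruct p as [a b]; simpl in *.
    apply Cx_eq; unfold Cmul, Cinv, Cone; simpl; field; lra.
Qed.

Add Field C_field : C_field_theory.

Lemma Csub_neq0 (w z : Cx) : w <> z -> Csub w z <> C0.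
Proof. intros N E. apply N. replace w with (Cadd (Csub w z) z) by ring. rewrite E. ring. Qed.

Lemma Cmul_neq0 (u v : Cx) : u <> C0 -> v <> C0 -> Cmul u v <> C0.
Proof. intros Nu Nv E. apply Nv. replace v with (Cmul (Cinv u) (Cmul u v)) by (field; auto). rewrite E; ring. Qed.

Lemma Cmul_eq0_l (u v : Cx) : Cmul u v = C0 -> v <> C0 -> u = C0.
Proof. intros H N. replace u with (Cmul (Cmul u v) (Cinv v)) by (field; auto). rewrite H. ring. Qed.

Lemma Cx_dec (z w : Cx) : {z = w} + {z <> w}.
Proof. apply excluded_middle_informative. Qed.

Fixpoint Cpow (z : Cx) (n : nat) : Cx := match n with O => Cone | S m => Cmul z (Cpow z m) end.

Fixpoint Csum (F : nat -> Cx) (N : nat) : Cx :=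
  match N with O => C0 | S n => Cadd (Csum F n) (F n) end.

Lemma Csum_eq0 (F : nat -> Cx) (N : nat) : (forall n, (n < N)%nat -> F n = C0) -> Csum F N = C0.
Proof. induction N; intros H; cbn [Csum]; auto. rewrite IHN, H; [ring | lia | intros n Hn; apply H; lia]. Qed.

Lemma Csum_ext (F G : nat -> Cx) (N : nat) : (forall n, F n = G n) -> Csum F N = Csum G N.
Proof. intros H. induction N; cbn [Csum]; auto. rewrite IHN, H; auto. Qed.

Lemma Csum_mul_l (k : Cx) (F : nat -> Cx) (N : nat) :
  Csum (fun n => Cmul k (F n)) N = Cmul k (Csum F N).
Proof. induction N; cbn [Csum]. ring. rewrite IHN. ring. Qed.

Lemma Cmod_ge0 (z : Cx) : 0 <= Cmod z.
Proof. apply sqrt_pos. Qed.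

Lemma Cmod_sq (z : Cx) : Cmod z * Cmod z = fst z * fst z + snd z * snd z.
Proof. unfold Cmod; apply sqrt_sqrt; nra. Qed.

Lemma Cmod_le_of_sq (z : Cx) (r : R) :
  0 <= r -> fst z * fst z + snd z * snd z <= r * r -> Cmod z <= r.
Proof.
  intros Hr Hz. unfold Cmod. rewrite <- (sqrt_square r Hr).
  apply sqrt_le_1_alt; auto.
Qed.

Lemma Cmod_mul (z w : Cx) : Cmod (Cmul z w) = Cmod z * Cmod w.
Proof.
  destruct z as [a b], w as [c d]; unfold Cmod, Cmul; simpl.
  rewrite <- sqrt_mult by nra. f_equal; ring.
Qed.

Lemma Cdot_le (z w : Cx) : fst z * fst w + snd z * snd w <= Cmod z * Cmod w.
Proof.
  pose proof (Cmod_sq z); pose proof (Cmod_sq w); pose proof (Cmod_ge0 z); pose proof (Cmod_ge0 w).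
  destruct z as [p q], w as [r s]; simpl in *.
  assert ((p*r+q*s)*(p*r+q*s) <= (Cmod (p,q) * Cmod (r,s)) * (Cmod (p,q) * Cmod (r,s))).
  { replace ((Cmod (p,q) * Cmod (r,s)) * (Cmod (p,q) * Cmod (r,s))) with
        ((Cmod (p,q) * Cmod (p,q)) * (Cmod (r,s) * Cmod (r,s))) by ring.
    rewrite H, H0. pose proof (Rle_0_sqr (p*s-q*r)). unfold Rsqr in *. nra. }
  assert (0 <= Cmod (p,q) * Cmod (r,s)) by nra. nra.
Qed.

Lemma Cmod_add (z w : Cx) : Cmod (Cadd z w) <= Cmod z + Cmod w.
Proof.
  pose proof (Cmod_ge0 z); pose proof (Cmod_ge0 w).
  apply Cmod_le_of_sq; [lra|].
  pose proof (Cmod_sq z); pose proof (Cmod_sq w); pose proof (Cdot_le z w).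
  destruct z as [a b], w as [c d]; unfold Cadd; simpl in *. nra.
Qed.

Lemma Cmod_fst (z : Cx) : Rabs (fst z) <= Cmod z.
Proof.
  pose proof (Cmod_sq z). pose proof (Cmod_ge0 z).
  rewrite <- (Rabs_pos_eq (Cmod z)) by auto. apply Rsqr_le_abs_0. unfold Rsqr. nra.
Qed.

Lemma Cmod_snd (z : Cx) : Rabs (snd z) <= Cmod z.
Proof.
  pose proof (Cmod_sq z). pose proof (Cmod_ge0 z).
  rewrite <- (Rabs_pos_eq (Cmod z)) by auto. apply Rsqr_le_abs_0. unfold Rsqr. nra.
Qed.

Lemma Cmod_le_abs (z : Cx) : Cmod z <= Rabs (fst z) + Rabs (snd z).
Proof.
  pose proof (Rabs_pos (fst z)); pose proof (Rabs_pos (snd z)).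
  apply Cmod_le_of_sq; [lra|].
  pose proof (Rsqr_abs (fst z)); pose proof (Rsqr_abs (snd z)); unfold Rsqr in *. nra.
Qed.

Lemma Cmod_C0 : Cmod C0 = 0.
Proof. unfold Cmod, C0; simpl. replace (0*0+0*0) with 0 by ring. apply sqrt_0. Qed.

Lemma Cmod_pos (z : Cx) : z <> C0 -> 0 < Cmod z.
Proof.
  intros H. pose proof (Cmod_ge0 z). destruct (Req_dec (Cmod z) 0) as [E|]; [|lra].
  exfalso; apply H. pose proof (Cmod_sq z). rewrite E in H1.
  destruct z as [a b]; simpl in *. apply Cpair_eq; nra.
Qed.

Lemma Cmod_Cone : Cmod Cone = 1.
Proof. unfold Cmod, Cone; simpl. replace (1*1+0*0) with 1 by ring. apply sqrt_1. Qed.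

Lemma Cmod_Ci : Cmod Ci = 1.
Proof. unfold Cmod, Ci; simpl. replace (0*0+1*1) with 1 by ring. apply sqrt_1. Qed.

Lemma Cmod_RC (r : R) : Cmod (RC r) = Rabs r.
Proof.
  unfold Cmod, RC; simpl. replace (r*r+0*0) with (Rsqr r) by (unfold Rsqr; ring).
  apply sqrt_Rsqr_abs.
Qed.

Lemma Cmod_inv (z : Cx) : z <> C0 -> Cmod (Cinv z) = / Cmod z.
Proof.
  intros H. pose proof (Cmod_pos z H).
  assert (Cmod (Cinv z) * Cmod z = 1).
  { rewrite <- Cmod_mul. replace (Cmul (Cinv z) z) with Cone by (field; auto). apply Cmod_Cone. }
  field_simplify_eq; lra.
Qed.

Lemma Cmod_opp (z : Cx) : Cmod (Copp z) = Cmod z.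
Proof. destruct z; unfold Cmod, Copp; simpl; f_equal; ring. Qed.

Lemma Cmod_sub_sym (z w : Cx) : Cmod (Csub z w) = Cmod (Csub w z).
Proof. replace (Csub z w) with (Copp (Csub w z)) by ring. apply Cmod_opp. Qed.

Lemma Cmod_sub (z w : Cx) : Cmod (Csub z w) <= Cmod z + Cmod w.
Proof. unfold Csub. rewrite <- (Cmod_opp w). apply Cmod_add. Qed.

Lemma Cmod_sub_ge (z w : Cx) : Cmod z - Cmod w <= Cmod (Csub z w).
Proof.
  pose proof (Cmod_add (Csub z w) w). replace (Cadd (Csub z w) w) with z in H by ring. lra.
Qed.

Lemma Cmod_sub_triangle (a b c : Cx) : Cmod (Csub a c) <= Cmod (Csub a b) + Cmod (Csub b c).
Proof. replace (Csub a c) with (Cadd (Csub a b) (Csub b c)) by ring. apply Cmod_add. Qed.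

Lemma Cmod_sub_diag (z : Cx) : Cmod (Csub z z) = 0.
Proof. replace (Csub z z) with C0 by ring. apply Cmod_C0. Qed.

Lemma Cmod_pow (z : Cx) (n : nat) : Cmod (Cpow z n) = Cmod z ^ n.
Proof. induction n; simpl. apply Cmod_Cone. rewrite Cmod_mul, IHn; auto. Qed.

Lemma Cpow_neq0 (z : Cx) (n : nat) : z <> C0 -> Cpow z n <> C0.
Proof. intros H. induction n; simpl. apply Cone_neq_C0. apply Cmul_neq0; auto. Qed.

Lemma Rlt_Rmin_l (x a b : R) : x < Rmin a b -> x < a.
Proof. intros H. eapply Rlt_le_trans; [apply H|apply Rmin_l]. Qed.

Lemma Rlt_Rmin_r (x a b : R) : x < Rmin a b -> x < b.
Proof. intros H. eapply Rlt_le_trans; [apply H|apply Rmin_r]. Qed.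

Lemma Rmult_div_succ_lt (e A : R) : 0 < e -> 0 <= A -> e / (A + 1) * A < e.
Proof.
  intros He HA. replace (e / (A + 1) * A) with (e - e / (A + 1)) by (field; lra).
  assert (0 < e / (A + 1)) by (apply Rdiv_lt_0_compat; lra). lra.
Qed.

Definition near (z : Cx) (P : Cx -> Prop) : Prop :=
  exists r, 0 < r /\ forall w, Cmod (Csub w z) < r -> P w.

Lemma near_and (z : Cx) (P Q : Cx -> Prop) :
  near z P -> near z Q -> near z (fun w => P w /\ Q w).
Proof.
  intros [r1 [Hr1 H1]] [r2 [Hr2 H2]]. exists (Rmin r1 r2); split.
  - apply Rmin_glb_lt; auto.
  - intros w Hw; split; [apply H1; eapply Rlt_Rmin_l | apply H2; eapply Rlt_Rmin_r]; eauto.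
Qed.

Lemma near_mono (z : Cx) (P Q : Cx -> Prop) :
  (forall w, P w -> Q w) -> near z P -> near z Q.
Proof. intros HPQ [r [Hr H]]. exists r; split; auto. Qed.

Lemma near_self (z : Cx) (P : Cx -> Prop) : near z P -> P z.
Proof. intros [r [Hr H]]. apply H. rewrite Cmod_sub_diag; auto. Qed.

Lemma near_in_ball (z p : Cx) (r : R) (P : Cx -> Prop) :
  (forall w, Cmod (Csub w z) < r -> P w) -> Cmod (Csub p z) < r -> near p P.
Proof.
  intros H Hp. exists (r - Cmod (Csub p z)); split; [lra|]. intros w Hw.
  apply H. pose proof (Cmod_sub_triangle w p z). lra.
Qed.

Lemma near_open (z : Cx) (P : Cx -> Prop) : near z P -> near z (fun w => near w P).
Proof. intros [r [Hr H]]. exists r; split; auto. intros w Hw. eapply near_in_ball; eauto. Qed.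

Lemma exists_near_neq (z : Cx) (r : R) : 0 < r -> exists w, w <> z /\ Cmod (Csub w z) < r.
Proof.
  intros Hr. exists (Cadd z (RC (r / 2))).
  replace (Csub (Cadd z (RC (r / 2))) z) with (RC (r / 2)) by ring.
  rewrite Cmod_RC, Rabs_pos_eq by lra. split; [|lra].
  intro E. apply (f_equal fst) in E. unfold Cadd, RC in E; simpl in E. lra.
Qed.

Definition Ccont (f : Cx -> Cx) (z : Cx) : Prop :=
  forall eps, 0 < eps -> near z (fun w => Cmod (Csub (f w) (f z)) < eps).

Lemma Ccont_const (k z : Cx) : Ccont (fun _ => k) z.
Proof. intros e He. exists 1; split; [lra|]. intros. rewrite Cmod_sub_diag; lra. Qed.

Lemma Ccont_id (z : Cx) : Ccont (fun w => w) z.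
Proof. intros e He. exists e; split; auto. Qed.

Lemma Ccont_bounded (f : Cx -> Cx) (z : Cx) :
  Ccont f z -> near z (fun w => Cmod (f w) <= Cmod (f z) + 1).
Proof.
  intros Hf. refine (near_mono _ _ _ _ (Hf 1 Rlt_0_1)); intros w H.
  pose proof (Cmod_sub_ge (f w) (f z)). lra.
Qed.

Lemma Ccont_neq (f : Cx -> Cx) (z k : Cx) : Ccont f z -> f z <> k -> near z (fun w => f w <> k).
Proof.
  intros Hf Hk. refine (near_mono _ _ _ _ (Hf _ (Cmod_pos _ (Csub_neq0 _ _ Hk)))); intros w H.
  intro E. rewrite E, Cmod_sub_sym in H. lra.
Qed.

Lemma Ccont_add (f g : Cx -> Cx) (z : Cx) :
  Ccont f z -> Ccont g z -> Ccont (fun w => Cadd (f w) (g w)) z.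
Proof.
  intros Hf Hg e He.
  refine (near_mono _ _ _ _ (near_and _ _ _ (Hf (e/2) ltac:(lra)) (Hg (e/2) ltac:(lra)))); intros w H.
  replace (Csub (Cadd (f w) (g w)) (Cadd (f z) (g z)))
    with (Cadd (Csub (f w) (f z)) (Csub (g w) (g z))) by ring.
  pose proof (Cmod_add (Csub (f w) (f z)) (Csub (g w) (g z))). lra.
Qed.

Lemma Ccont_opp (f : Cx -> Cx) (z : Cx) : Ccont f z -> Ccont (fun w => Copp (f w)) z.
Proof.
  intros Hf e He. refine (near_mono _ _ _ _ (Hf e He)); intros w H.
  replace (Csub (Copp (f w)) (Copp (f z))) with (Copp (Csub (f w) (f z))) by ring.
  rewrite Cmod_opp; auto.
Qed.

Lemma Ccont_sub (f g : Cx -> Cx) (z : Cx) :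
  Ccont f z -> Ccont g z -> Ccont (fun w => Csub (f w) (g w)) z.
Proof. intros. apply Ccont_add; auto. apply Ccont_opp; auto. Qed.

Lemma Ccont_mul (f g : Cx -> Cx) (z : Cx) :
  Ccont f z -> Ccont g z -> Ccont (fun w => Cmul (f w) (g w)) z.
Proof.
  intros Hf Hg e He.
  set (A := Cmod (f z) + 1). set (B := Cmod (g z) + 1).
  assert (HA : 0 < A) by (pose proof (Cmod_ge0 (f z)); unfold A; lra).
  assert (HB : 0 < B) by (pose proof (Cmod_ge0 (g z)); unfold B; lra).
  assert (H1 := Hf (e/(2*B)) ltac:(apply Rdiv_lt_0_compat; lra)).
  assert (H2 := Hg (e/(2*A)) ltac:(apply Rdiv_lt_0_compat; lra)).
  refine (near_mono _ _ _ _ (near_and _ _ _ (Ccont_bounded g z Hg) (near_and _ _ _ H1 H2))); intros w H.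
  destruct H as [G0 [G1 G2]].
  replace (Csub (Cmul (f w) (g w)) (Cmul (f z) (g z))) with
     (Cadd (Cmul (Csub (f w) (f z)) (g w)) (Cmul (f z) (Csub (g w) (g z)))) by ring.
  eapply Rle_lt_trans; [apply Cmod_add|]. rewrite !Cmod_mul.
  pose proof (Cmod_ge0 (Csub (f w) (f z))). pose proof (Cmod_ge0 (f z)).
  assert (Cmod (Csub (f w) (f z)) * Cmod (g w) <= e/(2*B) * B)
    by (apply Rmult_le_compat; auto using Cmod_ge0; lra).
  assert (Cmod (f z) * Cmod (Csub (g w) (g z)) < A * (e/(2*A))).
  { apply Rle_lt_trans with (A * Cmod (Csub (g w) (g z))).
    - apply Rmult_le_compat_r; [apply Cmod_ge0 | unfold A; lra].
    - apply Rmult_lt_compat_l; auto. }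
  assert (e/(2*B)*B = e/2) by (field; lra). assert (A*(e/(2*A)) = e/2) by (field; lra). lra.
Qed.

Lemma Ccont_inv (f : Cx -> Cx) (z : Cx) : Ccont f z -> f z <> C0 -> Ccont (fun w => Cinv (f w)) z.
Proof.
  intros Hf Hz e He.
  set (m := Cmod (f z)). assert (Hm : 0 < m) by (apply Cmod_pos; auto).
  assert (H2 := Hf (e * m * m / 2) ltac:(apply Rdiv_lt_0_compat; [|lra]; repeat apply Rmult_lt_0_compat; auto)).
  refine (near_mono _ _ _ _ (near_and _ _ _ (Hf (m/2) ltac:(lra)) H2)); intros w H.
  destruct H as [H1 H2'].
  assert (Hfw : m/2 <= Cmod (f w))
    by (pose proof (Cmod_sub_ge (f z) (f w)); rewrite Cmod_sub_sym in H1; fold m in H; lra).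
  assert (Hfw0 : f w <> C0) by (intro E; rewrite E, Cmod_C0 in Hfw; lra).
  replace (Csub (Cinv (f w)) (Cinv (f z))) with (Cmul (Csub (f z) (f w)) (Cinv (Cmul (f w) (f z))))
    by (field; auto).
  rewrite Cmod_mul, Cmod_inv, Cmod_mul by (apply Cmul_neq0; auto).
  fold m. rewrite Cmod_sub_sym.
  apply Rle_lt_trans with (Cmod (Csub (f w) (f z)) * / (m/2 * m)).
  - apply Rmult_le_compat_l; [apply Cmod_ge0|]. apply Rinv_le_contravar; nra.
  - replace (Cmod (Csub (f w) (f z)) * / (m / 2 * m)) with (Cmod (Csub (f w) (f z)) * 2 / (m*m))
      by (field; lra).
    apply Rlt_le_trans with ((e*m*m/2) * 2 / (m*m)).
    + unfold Rdiv. apply Rmult_lt_compat_r. apply Rinv_0_lt_compat; nra. lra.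
    + right; field; lra.
Qed.

Lemma Ccont_pow (f : Cx -> Cx) (z : Cx) (n : nat) : Ccont f z -> Ccont (fun w => Cpow (f w) n) z.
Proof. intros H. induction n; simpl. apply Ccont_const. apply Ccont_mul; auto. Qed.

Lemma Ccont_local (f g : Cx -> Cx) (z : Cx) :
  near z (fun w => g w = f w) -> Ccont f z -> Ccont g z.
Proof.
  intros Heq Hf e He. pose proof (near_self _ _ Heq) as Ez.
  refine (near_mono _ _ _ _ (near_and _ _ _ Heq (Hf e He))); intros w H.
  destruct H as [E H]. rewrite E, Ez; auto.
Qed.

Lemma Ccont_two_values_locally_const (f : Cx -> Cx) (z a b : Cx) :
  Ccont f z -> a <> b -> near z (fun w => f w = a \/ f w = b) -> near z (fun w => f w = f z).
Proof.
  intros Hf Hab Hv.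
  pose proof (Cmod_pos _ (Csub_neq0 _ _ Hab)) as Hd.
  refine (near_mono _ _ _ _ (near_and _ _ _ Hv (Hf _ Hd))); intros w H.
  destruct H as [Hw Hc].
  destruct (near_self _ _ Hv) as [Hz|Hz], Hw as [Hw|Hw]; rewrite Hw, Hz in *; auto; exfalso.
  - rewrite Cmod_sub_sym in Hc. lra.
  - lra.
Qed.

(** * Complex differentiability *)

(* Carathéodory's form of differentiability at [z]; [phi z] is then the derivative. *)
Definition caratheodory (f : Cx -> Cx) (z : Cx) (phi : Cx -> Cx) : Prop :=
  Ccont phi z /\ near z (fun w => Csub (f w) (f z) = Cmul (phi w) (Csub w z)).

Lemma Cdiff_caratheodory (f : Cx -> Cx) (z : Cx) :
  Cdifferentiable f z -> exists phi, caratheodory f z phi.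
Proof.
  intros [l Hl].
  exists (fun w => if Cx_dec w z then l else Cdiv (Csub (f w) (f z)) (Csub w z)). split.
  - intros e He. destruct (Hl e He) as [d [Hd H]]. exists d; split; auto. intros w Hw.
    destruct (Cx_dec z z) as [_|C]; [|congruence].
    destruct (Cx_dec w z) as [->|N].
    + rewrite Cmod_sub_diag; auto.
    + apply H; auto.
  - exists 1; split; [lra|]. intros w _. destruct (Cx_dec w z) as [->|N].
    + ring.
    + field. apply Csub_neq0; auto.
Qed.

Lemma caratheodory_Cdiff (f : Cx -> Cx) (z : Cx) (phi : Cx -> Cx) :
  caratheodory f z phi -> Cdifferentiable f z.
Proof.
  intros [Hc Hid]. exists (phi z). intros e He.
  destruct (near_and _ _ _ (Hc e He) Hid) as [d [Hd H]]. exists d; split; auto.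
  intros w Hwz Hw. destruct (H w Hw) as [Hphi E]. rewrite E.
  replace (Cdiv (Cmul (phi w) (Csub w z)) (Csub w z)) with (phi w); auto.
  field. apply Csub_neq0; auto.
Qed.

Lemma caratheodory_cont (f : Cx -> Cx) (z : Cx) (phi : Cx -> Cx) :
  caratheodory f z phi -> Ccont f z.
Proof.
  intros [Hc Hid] e He.
  set (B := Cmod (phi z) + 1). assert (HB : 0 < B) by (pose proof (Cmod_ge0 (phi z)); unfold B; lra).
  assert (Hsmall : near z (fun w => Cmod (Csub w z) < e / B))
    by (exists (e / B); split; auto; apply Rdiv_lt_0_compat; auto).
  refine (near_mono _ _ _ _ (near_and _ _ _ (Ccont_bounded phi z Hc) (near_and _ _ _ Hid Hsmall))).
  intros w [Hb [E Hw]]. rewrite E, Cmod_mul.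
  apply Rle_lt_trans with (B * Cmod (Csub w z)).
  - apply Rmult_le_compat_r; [apply Cmod_ge0|]. unfold B; lra.
  - replace e with (B * (e / B)) by (field; lra). apply Rmult_lt_compat_l; auto.
Qed.

Lemma Cdiff_cont (f : Cx -> Cx) (z : Cx) : Cdifferentiable f z -> Ccont f z.
Proof. intros H. destruct (Cdiff_caratheodory f z H) as [phi Hphi]. eapply caratheodory_cont; eauto. Qed.

Lemma Cdiff_local (f g : Cx -> Cx) (z : Cx) :
  near z (fun w => g w = f w) -> Cdifferentiable f z -> Cdifferentiable g z.
Proof.
  intros Heq Hf. destruct (Cdiff_caratheodory f z Hf) as [phi [Hc Hid]].
  apply (caratheodory_Cdiff g z phi). split; auto.
  pose proof (near_self _ _ Heq) as Ez.
  refine (near_mono _ _ _ _ (near_and _ _ _ Heq Hid)). intros w [E H]. rewrite E, Ez; auto.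
Qed.

Lemma Cdiff_const (k z : Cx) : Cdifferentiable (fun _ => k) z.
Proof.
  apply (caratheodory_Cdiff _ _ (fun _ => C0)). split; [apply Ccont_const|].
  exists 1; split; [lra|]. intros; ring.
Qed.

Lemma Cdiff_id (z : Cx) : Cdifferentiable (fun w => w) z.
Proof.
  apply (caratheodory_Cdiff _ _ (fun _ => Cone)). split; [apply Ccont_const|].
  exists 1; split; [lra|]. intros; ring.
Qed.

Lemma Cdiff_sub (f g : Cx -> Cx) (z : Cx) :
  Cdifferentiable f z -> Cdifferentiable g z -> Cdifferentiable (fun w => Csub (f w) (g w)) z.
Proof.
  intros Hf Hg. destruct (Cdiff_caratheodory f z Hf) as [p1 [Hc1 H1]].
  destruct (Cdiff_caratheodory g z Hg) as [p2 [Hc2 H2]].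
  apply (caratheodory_Cdiff _ _ (fun w => Csub (p1 w) (p2 w))). split; [apply Ccont_sub; auto|].
  refine (near_mono _ _ _ _ (near_and _ _ _ H1 H2)). intros w [E1 E2].
  replace (Csub (Csub (f w) (g w)) (Csub (f z) (g z)))
    with (Csub (Csub (f w) (f z)) (Csub (g w) (g z))) by ring.
  rewrite E1, E2. ring.
Qed.

Lemma Cdiff_mul (f g : Cx -> Cx) (z : Cx) :
  Cdifferentiable f z -> Cdifferentiable g z -> Cdifferentiable (fun w => Cmul (f w) (g w)) z.
Proof.
  intros Hf Hg. pose proof (Cdiff_cont _ _ Hf) as Cf.
  destruct (Cdiff_caratheodory f z Hf) as [p1 [Hc1 H1]].
  destruct (Cdiff_caratheodory g z Hg) as [p2 [Hc2 H2]].
  apply (caratheodory_Cdiff _ _ (fun w => Cadd (Cmul (f w) (p2 w)) (Cmul (p1 w) (g z)))). split.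
  - apply Ccont_add; apply Ccont_mul; auto. apply Ccont_const.
  - refine (near_mono _ _ _ _ (near_and _ _ _ H1 H2)). intros w [E1 E2].
    replace (Csub (Cmul (f w) (g w)) (Cmul (f z) (g z))) with
      (Cadd (Cmul (f w) (Csub (g w) (g z))) (Cmul (Csub (f w) (f z)) (g z))) by ring.
    rewrite E1, E2. ring.
Qed.

Lemma Cdiff_inv (f : Cx -> Cx) (z : Cx) :
  Cdifferentiable f z -> f z <> C0 -> Cdifferentiable (fun w => Cinv (f w)) z.
Proof.
  intros Hf Hz. pose proof (Cdiff_cont _ _ Hf) as Cf.
  destruct (Cdiff_caratheodory f z Hf) as [p1 [Hc1 H1]].
  apply (caratheodory_Cdiff _ _ (fun w => Cmul (Copp (p1 w)) (Cinv (Cmul (f w) (f z))))). split.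
  - apply Ccont_mul; [apply Ccont_opp; auto|].
    apply Ccont_inv; [apply Ccont_mul; auto; apply Ccont_const | apply Cmul_neq0; auto].
  - refine (near_mono _ _ _ _ (near_and _ _ _ H1 (Ccont_neq f z C0 Cf Hz))). intros w [E Nw].
    transitivity (Cmul (Copp (Cmul (p1 w) (Csub w z))) (Cinv (Cmul (f w) (f z)))).
    + rewrite <- E. field. auto.
    + field. split; auto.
Qed.

Lemma mero_Cdiff (D : Cx -> Prop) (f : Cx -> Cx) (z : Cx) :
  meromorphic D f -> D z -> ~ pole f z -> Cdifferentiable f z.
Proof. intros [H _] Dz Np. destruct (H z Dz); auto; contradiction. Qed.

Lemma mero_regular_near (D : Cx -> Prop) (f : Cx -> Cx) (z : Cx) :
  Copen D -> meromorphic D f -> D z -> ~ pole f z ->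
  near z (fun w => D w /\ ~ pole f w /\ Cdifferentiable f w).
Proof.
  intros Dop Mf Dz Np.
  assert (Hnp : near z (fun w => ~ pole f w)).
  { destruct (proj2 Mf z Dz) as [r [Hr H]]. exists r; split; auto. intros w Hw.
    destruct (Cx_dec w z) as [->|N]; auto. }
  refine (near_mono _ _ _ _ (near_and _ _ _ (Dop z Dz) Hnp)). intros w [Dw Nw].
  repeat split; auto. eapply mero_Cdiff; eauto.
Qed.

(** * Integrals along segments and around rectangles *)

(* The Riemann integral as a total function; its value on non-integrable functions is [0]. *)
Definition RInt (f : R -> R) (a b : R) : R :=
  match excluded_middle_informative (inhabited (Riemann_integrable f a b)) with
  | left H => RiemannInt (epsilon H (fun _ => True))
  | right _ => 0
  end.

Lemma RInt_eq (f : R -> R) (a b : R) (pr : Riemann_integrable f a b) : RInt f a b = RiemannInt pr.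
Proof.
  unfold RInt. destruct (excluded_middle_informative _) as [H|H].
  - apply RiemannInt_P5.
  - exfalso; apply H; constructor; auto.
Qed.

Lemma Riemann_integrable_const (a b c : R) : Riemann_integrable (fun _ => c) a b.
Proof. apply (RiemannInt_P14 a b c). Qed.

Lemma RInt_const (a b c : R) : RInt (fun _ => c) a b = c * (b - a).
Proof.
  change (fun _ : R => c) with (fct_cte c). rewrite (RInt_eq _ _ _ (RiemannInt_P14 a b c)).
  apply RiemannInt_P15.
Qed.

Lemma RInt_lin (f g : R -> R) (a b l : R) : Riemann_integrable f a b -> Riemann_integrable g a b ->
  RInt (fun x => f x + l * g x) a b = RInt f a b + l * RInt g a b.
Proof.
  intros p1 p2. rewrite (RInt_eq _ _ _ (RiemannInt_P10 l p1 p2)), (RInt_eq _ _ _ p1), (RInt_eq _ _ _ p2).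
  apply RiemannInt_P13.
Qed.

Lemma RInt_scal (f : R -> R) (a b l : R) : Riemann_integrable f a b ->
  RInt (fun x => l * f x) a b = l * RInt f a b.
Proof.
  intros p. replace (fun x => l * f x) with (fun x => (fun _ => 0) x + l * f x)
    by (apply functional_extensionality; intros; ring).
  rewrite RInt_lin, RInt_const by auto using Riemann_integrable_const. ring.
Qed.

Lemma RInt_chasles (f : R -> R) (a m b : R) : a <= m <= b -> Riemann_integrable f a b ->
  RInt f a m + RInt f m b = RInt f a b.
Proof.
  intros Hm p. pose proof (RiemannInt_P22 p Hm) as p1. pose proof (RiemannInt_P23 p Hm) as p2.
  rewrite (RInt_eq _ _ _ p1), (RInt_eq _ _ _ p2), (RInt_eq _ _ _ p). apply RiemannInt_P26.
Qed.

Lemma RInt_le (f g : R -> R) (a b : R) : a <= b -> Riemann_integrable f a b -> Riemann_integrable g a b ->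
  (forall x, a <= x <= b -> f x <= g x) -> RInt f a b <= RInt g a b.
Proof.
  intros Hab p1 p2 H. rewrite (RInt_eq _ _ _ p1), (RInt_eq _ _ _ p2).
  apply RiemannInt_P19; auto. intros; apply H; lra.
Qed.

Lemma RInt_ge_const (f : R -> R) (a b m : R) : a <= b -> Riemann_integrable f a b ->
  (forall x, a <= x <= b -> m <= f x) -> m * (b - a) <= RInt f a b.
Proof. intros. rewrite <- RInt_const. apply RInt_le; auto using Riemann_integrable_const. Qed.

Lemma RInt_le_const (f : R -> R) (a b m : R) : a <= b -> Riemann_integrable f a b ->
  (forall x, a <= x <= b -> f x <= m) -> RInt f a b <= m * (b - a).
Proof. intros. rewrite <- RInt_const. apply RInt_le; auto using Riemann_integrable_const. Qed.

Lemma RInt_ext (f g : R -> R) (a b : R) : a <= b -> Riemann_integrable f a b ->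
  (forall x, a <= x <= b -> f x = g x) -> RInt f a b = RInt g a b.
Proof.
  intros Hab p H. assert (p2 : Riemann_integrable g a b).
  { apply Riemann_integrable_ext with f; auto. intros x Hx. apply H.
    rewrite Rmin_left, Rmax_right in Hx; auto. }
  rewrite (RInt_eq _ _ _ p), (RInt_eq _ _ _ p2). apply RiemannInt_P18; auto. intros; apply H; lra.
Qed.

Lemma RInt_point (f : R -> R) (a : R) : RInt f a a = 0.
Proof. rewrite (RInt_eq _ _ _ (RiemannInt_P7 f a)). apply RiemannInt_P9. Qed.

Definition CcontR (h : R -> Cx) (t : R) : Prop :=
  forall eps, 0 < eps -> exists delta, 0 < delta /\
    forall s, Rabs (s - t) < delta -> Cmod (Csub (h s) (h t)) < eps.

Definition CcontR_on (h : R -> Cx) (a b : R) : Prop := forall t, a <= t <= b -> CcontR h t.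

Lemma CcontR_lipschitz (pr : Cx -> R) (h : R -> Cx) (t : R) :
  (forall u v, Rabs (pr u - pr v) <= Cmod (Csub u v)) -> CcontR h t -> continuity_pt (fun s => pr (h s)) t.
Proof.
  intros Hpr H e He. destruct (H e He) as [d [Hd Hs]]. exists d; split; auto.
  intros s [_ Hst]. simpl in *. unfold R_dist in *.
  eapply Rle_lt_trans; [apply Hpr | apply Hs; auto].
Qed.

Lemma fst_lipschitz (u v : Cx) : Rabs (fst u - fst v) <= Cmod (Csub u v).
Proof. apply (Cmod_fst (Csub u v)). Qed.

Lemma snd_lipschitz (u v : Cx) : Rabs (snd u - snd v) <= Cmod (Csub u v).
Proof. apply (Cmod_snd (Csub u v)). Qed.

Lemma Cmod_lipschitz (u v : Cx) : Rabs (Cmod u - Cmod v) <= Cmod (Csub u v).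
Proof.
  pose proof (Cmod_sub_ge u v). pose proof (Cmod_sub_ge v u). rewrite Cmod_sub_sym in H0.
  apply Rabs_le; lra.
Qed.

Lemma CcontR_on_integrable_fst (h : R -> Cx) (a b : R) :
  a <= b -> CcontR_on h a b -> Riemann_integrable (fun s => fst (h s)) a b.
Proof.
  intros. apply continuity_implies_RiemannInt; auto. intros; apply CcontR_lipschitz; auto using fst_lipschitz.
Qed.

Lemma CcontR_on_integrable_snd (h : R -> Cx) (a b : R) :
  a <= b -> CcontR_on h a b -> Riemann_integrable (fun s => snd (h s)) a b.
Proof.
  intros. apply continuity_implies_RiemannInt; auto. intros; apply CcontR_lipschitz; auto using snd_lipschitz.
Qed.

Lemma CcontR_on_bounded (h : R -> Cx) (a b : R) : a <= b -> CcontR_on h a b ->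
  exists M, forall t, a <= t <= b -> Cmod (h t) <= M.
Proof.
  intros Hab Hc. destruct (continuity_ab_maj (fun t => Cmod (h t)) a b Hab) as [Mx [HM _]].
  - intros t Ht. apply CcontR_lipschitz; auto using Cmod_lipschitz.
  - exists (Cmod (h Mx)). auto.
Qed.

Lemma Ccont_horizontal (g : Cx -> Cx) (x y : R) : Ccont g (x, y) -> CcontR (fun t => g (t, y)) x.
Proof.
  intros H e He. destruct (H e He) as [d [Hd Hs]]. exists d; split; auto.
  intros s Hsx. apply Hs. eapply Rle_lt_trans; [apply Cmod_le_abs|].
  unfold Csub, Cadd, Copp; simpl. replace (y + - y) with 0 by ring. rewrite Rabs_R0.
  replace (s + - x) with (s - x) by ring. lra.
Qed.

Lemma Ccont_vertical (g : Cx -> Cx) (x y : R) : Ccont g (x, y) -> CcontR (fun t => g (x, t)) y.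
Proof.
  intros H e He. destruct (H e He) as [d [Hd Hs]]. exists d; split; auto.
  intros s Hsy. apply Hs. eapply Rle_lt_trans; [apply Cmod_le_abs|].
  unfold Csub, Cadd, Copp; simpl. replace (x + - x) with 0 by ring. rewrite Rabs_R0.
  replace (s + - y) with (s - y) by ring. lra.
Qed.

Definition CRInt (h : R -> Cx) (a b : R) : Cx :=
  (RInt (fun s => fst (h s)) a b, RInt (fun s => snd (h s)) a b).

Lemma CRInt_const (a b : R) (k : Cx) : CRInt (fun _ => k) a b = Cmul k (RC (b - a)).
Proof. unfold CRInt, Cmul, RC; simpl. rewrite !RInt_const. apply Cx_eq; simpl; ring. Qed.

Lemma CRInt_point (h : R -> Cx) (a : R) : CRInt h a a = C0.
Proof. unfold CRInt. rewrite !RInt_point. reflexivity. Qed.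

Lemma CRInt_chasles (h : R -> Cx) (a m b : R) : a <= m <= b -> CcontR_on h a b ->
  Cadd (CRInt h a m) (CRInt h m b) = CRInt h a b.
Proof.
  intros. unfold CRInt, Cadd; simpl. apply Cx_eq; simpl; apply RInt_chasles; auto.
  - apply CcontR_on_integrable_fst; auto; lra.
  - apply CcontR_on_integrable_snd; auto; lra.
Qed.

Section CRInt_theory.
Variables (a b : R).
Hypothesis Hab : a <= b.

Lemma CRInt_lin (h1 h2 : R -> Cx) (l : R) : CcontR_on h1 a b -> CcontR_on h2 a b ->
  CRInt (fun t => Cadd (h1 t) (Cmul (RC l) (h2 t))) a b = Cadd (CRInt h1 a b) (Cmul (RC l) (CRInt h2 a b)).
Proof.
  intros H1 H2. unfold CRInt, Cadd, Cmul, RC; simpl. apply Cx_eq; simpl.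
  - transitivity (RInt (fun s => fst (h1 s) + l * fst (h2 s)) a b).
    + f_equal; apply functional_extensionality; intros; ring.
    + rewrite RInt_lin by (apply CcontR_on_integrable_fst; auto). ring.
  - transitivity (RInt (fun s => snd (h1 s) + l * snd (h2 s)) a b).
    + f_equal; apply functional_extensionality; intros; ring.
    + rewrite RInt_lin by (apply CcontR_on_integrable_snd; auto). ring.
Qed.

Lemma CRInt_add (h1 h2 : R -> Cx) : CcontR_on h1 a b -> CcontR_on h2 a b ->
  CRInt (fun t => Cadd (h1 t) (h2 t)) a b = Cadd (CRInt h1 a b) (CRInt h2 a b).
Proof.
  intros H1 H2. pose proof (CRInt_lin h1 h2 1 H1 H2) as E.
  change (RC 1) with Cone in E. replace (Cmul Cone (CRInt h2 a b)) with (CRInt h2 a b) in E by ring.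
  rewrite <- E. f_equal. apply functional_extensionality; intros. ring.
Qed.

Lemma CRInt_sub (h1 h2 : R -> Cx) : CcontR_on h1 a b -> CcontR_on h2 a b ->
  CRInt (fun t => Csub (h1 t) (h2 t)) a b = Csub (CRInt h1 a b) (CRInt h2 a b).
Proof.
  intros H1 H2. pose proof (CRInt_lin h1 h2 (-1) H1 H2) as E.
  replace (Cadd (CRInt h1 a b) (Cmul (RC (-1)) (CRInt h2 a b))) with (Csub (CRInt h1 a b) (CRInt h2 a b)) in E
    by (apply Cx_eq; unfold Csub, Cadd, Copp, Cmul, RC; simpl; ring).
  rewrite <- E. f_equal. apply functional_extensionality; intros.
  apply Cx_eq; unfold Csub, Cadd, Copp, Cmul, RC; simpl; ring.
Qed.

Lemma CRInt_scal (k : Cx) (h : R -> Cx) : CcontR_on h a b ->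
  CRInt (fun t => Cmul k (h t)) a b = Cmul k (CRInt h a b).
Proof.
  intros H. pose proof (CcontR_on_integrable_fst h a b Hab H). pose proof (CcontR_on_integrable_snd h a b Hab H).
  unfold CRInt, Cmul; simpl. apply Cx_eq; simpl.
  - transitivity (RInt (fun s => fst k * fst (h s) + (- snd k) * snd (h s)) a b).
    + f_equal; apply functional_extensionality; intros; ring.
    + rewrite (RInt_lin (fun s => fst k * fst (h s))), RInt_scal by auto using Riemann_integrable_scal. ring.
  - transitivity (RInt (fun s => fst k * snd (h s) + snd k * fst (h s)) a b).
    + f_equal; apply functional_extensionality; intros; ring.
    + rewrite (RInt_lin (fun s => fst k * snd (h s))), RInt_scal by auto using Riemann_integrable_scal. ring.
Qed.

Lemma CRInt_ext (h1 h2 : R -> Cx) : CcontR_on h1 a b -> (forall t, a <= t <= b -> h1 t = h2 t) ->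
  CRInt h1 a b = CRInt h2 a b.
Proof.
  intros Hc E. unfold CRInt. apply Cx_eq; simpl; apply RInt_ext; auto; try (intros; rewrite E; auto).
  - apply CcontR_on_integrable_fst; auto.
  - apply CcontR_on_integrable_snd; auto.
Qed.

(* [|I|^2 = <I, int h> = int <I, h> <= |I| M (b - a)], by Cauchy–Schwarz under the integral. *)
Lemma CRInt_bound (h : R -> Cx) (M : R) : CcontR_on h a b -> (forall t, a <= t <= b -> Cmod (h t) <= M) ->
  Cmod (CRInt h a b) <= M * (b - a).
Proof.
  intros Hc HM. set (I := CRInt h a b).
  pose proof (CcontR_on_integrable_fst h a b Hab Hc) as p1. pose proof (CcontR_on_integrable_snd h a b Hab Hc) as p2.
  assert (E : Cmod I * Cmod I = RInt (fun s => fst I * fst (h s) + snd I * snd (h s)) a b).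
  { rewrite (RInt_lin (fun s => fst I * fst (h s))), RInt_scal by auto using Riemann_integrable_scal.
    rewrite Cmod_sq. unfold I, CRInt; simpl. ring. }
  assert (L : RInt (fun s => fst I * fst (h s) + snd I * snd (h s)) a b <= Cmod I * M * (b - a)).
  { rewrite <- RInt_const. apply RInt_le; auto using Riemann_integrable_const.
    - apply (RiemannInt_P10 (snd I) (Riemann_integrable_scal (fst I) p1) p2).
    - intros x Hx. eapply Rle_trans; [apply (Cdot_le I (h x))|].
      apply Rmult_le_compat_l; auto using Cmod_ge0. }
  pose proof (Cmod_ge0 I). assert (0 <= M) by (specialize (HM a ltac:(lra)); pose proof (Cmod_ge0 (h a)); lra).
  destruct (Req_dec (Cmod I) 0) as [->|NZ]; [nra|].
  apply Rmult_le_reg_l with (Cmod I); lra.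
Qed.

End CRInt_theory.

(* The contour integral of [g] over the boundary of [[a, b] x [c, d]], counterclockwise. *)
Definition rect_int (g : Cx -> Cx) (a b c d : R) : Cx :=
  Csub (Cadd (CRInt (fun x => g (x, c)) a b) (Cmul Ci (CRInt (fun y => g (b, y)) c d)))
       (Cadd (CRInt (fun x => g (x, d)) a b) (Cmul Ci (CRInt (fun y => g (a, y)) c d))).

Definition cont_on_rect (g : Cx -> Cx) (a b c d : R) : Prop :=
  forall x y, a <= x <= b -> c <= y <= d -> Ccont g (x, y).

Definition on_bd (a b c d : R) (w : Cx) : Prop :=
  (a <= fst w <= b /\ (snd w = c \/ snd w = d)) \/ (c <= snd w <= d /\ (fst w = a \/ fst w = b)).

Definition cont_on_bd (g : Cx -> Cx) (a b c d : R) : Prop :=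
  (forall x, a <= x <= b -> Ccont g (x, c) /\ Ccont g (x, d)) /\
  (forall y, c <= y <= d -> Ccont g (a, y) /\ Ccont g (b, y)).

Lemma cont_on_rect_bd (g : Cx -> Cx) (a b c d : R) :
  a <= b -> c <= d -> cont_on_rect g a b c d -> cont_on_bd g a b c d.
Proof. intros H1 H2 H. split; intros; split; apply H; lra. Qed.

Lemma cont_on_rect_sub (g : Cx -> Cx) (a b c d a' b' c' d' : R) :
  a <= a' -> b' <= b -> c <= c' -> d' <= d -> cont_on_rect g a b c d -> cont_on_rect g a' b' c' d'.
Proof. intros H1 H2 H3 H4 H x y Hx Hy. apply H; lra. Qed.

Lemma cont_on_bd_of_cont (g : Cx -> Cx) (a b c d : R) : (forall z, Ccont g z) -> cont_on_bd g a b c d.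
Proof. intros. split; intros; split; auto. Qed.

Lemma Ccont_affine (al be z : Cx) : Ccont (fun w => Cadd al (Cmul be w)) z.
Proof. apply Ccont_add; [apply Ccont_const | apply Ccont_mul; [apply Ccont_const | apply Ccont_id]]. Qed.

Section rect_int_theory.
Variables (a b c d : R).

Lemma cont_on_bd_bottom (g : Cx -> Cx) : cont_on_bd g a b c d -> CcontR_on (fun x => g (x, c)) a b.
Proof. intros [H _] t Ht. apply Ccont_horizontal, H; auto. Qed.
Lemma cont_on_bd_top (g : Cx -> Cx) : cont_on_bd g a b c d -> CcontR_on (fun x => g (x, d)) a b.
Proof. intros [H _] t Ht. apply Ccont_horizontal, H; auto. Qed.
Lemma cont_on_bd_left (g : Cx -> Cx) : cont_on_bd g a b c d -> CcontR_on (fun y => g (a, y)) c d.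
Proof. intros [_ H] t Ht. apply Ccont_vertical, H; auto. Qed.
Lemma cont_on_bd_right (g : Cx -> Cx) : cont_on_bd g a b c d -> CcontR_on (fun y => g (b, y)) c d.
Proof. intros [_ H] t Ht. apply Ccont_vertical, H; auto. Qed.

Lemma cont_on_bd_add (g1 g2 : Cx -> Cx) : cont_on_bd g1 a b c d -> cont_on_bd g2 a b c d ->
  cont_on_bd (fun w => Cadd (g1 w) (g2 w)) a b c d.
Proof.
  intros [H1 H2] [H3 H4]. split; intros t Ht; split;
    (apply Ccont_add; [apply H1 || apply H2 | apply H3 || apply H4]; auto).
Qed.

Lemma cont_on_bd_scal (k : Cx) (g : Cx -> Cx) : cont_on_bd g a b c d -> cont_on_bd (fun w => Cmul k (g w)) a b c d.
Proof.
  intros [H1 H2]. split; intros t Ht; split; (apply Ccont_mul; [apply Ccont_const|]);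
    first [apply H1 | apply H2]; auto.
Qed.

Lemma cont_on_bd_bounded (g : Cx -> Cx) : a <= b -> c <= d -> cont_on_bd g a b c d ->
  exists M, 0 <= M /\ forall w, on_bd a b c d w -> Cmod (g w) <= M.
Proof.
  intros Hab Hcd Hc.
  destruct (CcontR_on_bounded _ a b Hab (cont_on_bd_bottom g Hc)) as [M1 H1].
  destruct (CcontR_on_bounded _ a b Hab (cont_on_bd_top g Hc)) as [M2 H2].
  destruct (CcontR_on_bounded _ c d Hcd (cont_on_bd_left g Hc)) as [M3 H3].
  destruct (CcontR_on_bounded _ c d Hcd (cont_on_bd_right g Hc)) as [M4 H4].
  pose proof (Rmax_l M1 M2); pose proof (Rmax_r M1 M2); pose proof (Rmax_l M3 M4); pose proof (Rmax_r M3 M4).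
  pose proof (Rmax_l (Rmax M1 M2) (Rmax M3 M4)); pose proof (Rmax_r (Rmax M1 M2) (Rmax M3 M4)).
  exists (Rmax (Rmax M1 M2) (Rmax M3 M4)). split.
  - pose proof (H1 a ltac:(lra)). pose proof (Cmod_ge0 (g (a, c))). lra.
  - intros [x y] Hw. unfold on_bd in Hw; simpl in Hw.
    destruct Hw as [[Hx [E|E]]|[Hy [E|E]]]; subst;
      [specialize (H1 x Hx) | specialize (H2 x Hx) | specialize (H3 y Hy) | specialize (H4 y Hy)]; lra.
Qed.

Hypotheses (Hab : a <= b) (Hcd : c <= d).

Lemma rect_int_add (g1 g2 : Cx -> Cx) : cont_on_bd g1 a b c d -> cont_on_bd g2 a b c d ->
  rect_int (fun w => Cadd (g1 w) (g2 w)) a b c d = Cadd (rect_int g1 a b c d) (rect_int g2 a b c d).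
Proof.
  intros. unfold rect_int.
  rewrite !(CRInt_add a b) by (auto; first [apply cont_on_bd_bottom | apply cont_on_bd_top]; auto).
  rewrite !(CRInt_add c d) by (auto; first [apply cont_on_bd_left | apply cont_on_bd_right]; auto).
  ring.
Qed.

Lemma rect_int_sub (g1 g2 : Cx -> Cx) : cont_on_bd g1 a b c d -> cont_on_bd g2 a b c d ->
  rect_int (fun w => Csub (g1 w) (g2 w)) a b c d = Csub (rect_int g1 a b c d) (rect_int g2 a b c d).
Proof.
  intros. unfold rect_int.
  rewrite !(CRInt_sub a b) by (auto; first [apply cont_on_bd_bottom | apply cont_on_bd_top]; auto).
  rewrite !(CRInt_sub c d) by (auto; first [apply cont_on_bd_left | apply cont_on_bd_right]; auto).
  ring.
Qed.

Lemma rect_int_scal (k : Cx) (g : Cx -> Cx) : cont_on_bd g a b c d ->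
  rect_int (fun w => Cmul k (g w)) a b c d = Cmul k (rect_int g a b c d).
Proof.
  intros. unfold rect_int.
  rewrite !(CRInt_scal a b) by (auto; first [apply cont_on_bd_bottom | apply cont_on_bd_top]; auto).
  rewrite !(CRInt_scal c d) by (auto; first [apply cont_on_bd_left | apply cont_on_bd_right]; auto).
  ring.
Qed.

Lemma rect_int_ext (g1 g2 : Cx -> Cx) : cont_on_bd g1 a b c d -> (forall w, on_bd a b c d w -> g1 w = g2 w) ->
  rect_int g1 a b c d = rect_int g2 a b c d.
Proof.
  intros Hc H. unfold rect_int.
  rewrite (CRInt_ext a b Hab (fun x => g1 (x, c)) (fun x => g2 (x, c))),
    (CRInt_ext a b Hab (fun x => g1 (x, d)) (fun x => g2 (x, d))),
    (CRInt_ext c d Hcd (fun y => g1 (a, y)) (fun y => g2 (a, y))),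
    (CRInt_ext c d Hcd (fun y => g1 (b, y)) (fun y => g2 (b, y))); auto;
  first [apply cont_on_bd_bottom | apply cont_on_bd_top | apply cont_on_bd_left | apply cont_on_bd_right
        | intros t Ht; apply H; unfold on_bd; simpl; auto]; auto.
Qed.

Lemma rect_int_bound (g : Cx -> Cx) (M : R) : cont_on_bd g a b c d ->
  (forall w, on_bd a b c d w -> Cmod (g w) <= M) ->
  Cmod (rect_int g a b c d) <= 2 * ((b - a) + (d - c)) * M.
Proof.
  intros Hc H. unfold rect_int.
  assert (B1 : Cmod (CRInt (fun x => g (x, c)) a b) <= M * (b - a)).
  { apply CRInt_bound; auto. apply cont_on_bd_bottom; auto. intros; apply H; unfold on_bd; simpl; auto. }
  assert (B2 : Cmod (CRInt (fun x => g (x, d)) a b) <= M * (b - a)).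
  { apply CRInt_bound; auto. apply cont_on_bd_top; auto. intros; apply H; unfold on_bd; simpl; auto. }
  assert (B3 : Cmod (CRInt (fun y => g (a, y)) c d) <= M * (d - c)).
  { apply CRInt_bound; auto. apply cont_on_bd_left; auto. intros; apply H; unfold on_bd; simpl; auto. }
  assert (B4 : Cmod (CRInt (fun y => g (b, y)) c d) <= M * (d - c)).
  { apply CRInt_bound; auto. apply cont_on_bd_right; auto. intros; apply H; unfold on_bd; simpl; auto. }
  eapply Rle_trans; [apply Cmod_sub|]. eapply Rle_trans; [apply Rplus_le_compat; apply Cmod_add|].
  rewrite !Cmod_mul, Cmod_Ci. lra.
Qed.

Lemma rect_int_affine (al be : Cx) : rect_int (fun w => Cadd al (Cmul be w)) a b c d = C0.
Proof.
  set (g := fun w => Cadd al (Cmul be w)).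
  assert (Hc : forall z, Ccont g z) by (intros; apply Ccont_affine).
  assert (E : rect_int g a b c d = Cadd (CRInt (fun x => Csub (g (x, c)) (g (x, d))) a b)
                                        (Cmul Ci (CRInt (fun y => Csub (g (b, y)) (g (a, y))) c d))).
  { rewrite (CRInt_sub a b Hab), (CRInt_sub c d Hcd) by (intros t _; auto using Ccont_vertical, Ccont_horizontal).
    unfold rect_int. ring. }
  rewrite E.
  replace (fun x => Csub (g (x, c)) (g (x, d))) with (fun _ : R => Cmul be (0, c - d))
    by (apply functional_extensionality; intros; unfold g; apply Cx_eq; unfold Csub, Cadd, Cmul, Copp; simpl; ring).
  replace (fun y => Csub (g (b, y)) (g (a, y))) with (fun _ : R => Cmul be (b - a, 0))
    by (apply functional_extensionality; intros; unfold g; apply Cx_eq; unfold Csub, Cadd, Cmul, Copp; simpl; ring).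
  rewrite !CRInt_const. apply Cx_eq; unfold Cadd, Cmul, Ci, RC, C0; simpl; ring.
Qed.

Lemma rect_int_Csum (F : nat -> Cx -> Cx) (N : nat) : (forall n, cont_on_bd (F n) a b c d) ->
  rect_int (fun w => Csum (fun n => F n w) N) a b c d = Csum (fun n => rect_int (F n) a b c d) N.
Proof.
  intros HF.
  assert (CB : forall N, cont_on_bd (fun w => Csum (fun n => F n w) N) a b c d).
  { induction N0; cbn [Csum]; [apply cont_on_bd_of_cont; intros; apply Ccont_const | apply cont_on_bd_add; auto]. }
  induction N; cbn [Csum].
  - replace (fun _ : Cx => C0) with (fun w => Cadd C0 (Cmul C0 w)) by (apply functional_extensionality; intros; ring).
    apply rect_int_affine.
  - rewrite rect_int_add, IHN; auto.
Qed.

End rect_int_theory.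

Lemma rect_int_split_x (g : Cx -> Cx) (a m b c d : R) : a <= m <= b -> c <= d -> cont_on_bd g a b c d ->
  rect_int g a b c d = Cadd (rect_int g a m c d) (rect_int g m b c d).
Proof.
  intros Hm Hcd Hc. unfold rect_int.
  rewrite <- (CRInt_chasles _ a m b Hm (cont_on_bd_bottom a b c d g Hc)),
    <- (CRInt_chasles _ a m b Hm (cont_on_bd_top a b c d g Hc)).
  ring.
Qed.

Lemma rect_int_split_y (g : Cx -> Cx) (a b c m d : R) : a <= b -> c <= m <= d -> cont_on_bd g a b c d ->
  rect_int g a b c d = Cadd (rect_int g a b c m) (rect_int g a b m d).
Proof.
  intros Hab Hm Hc. unfold rect_int.
  rewrite <- (CRInt_chasles _ c m d Hm (cont_on_bd_left a b c d g Hc)),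
    <- (CRInt_chasles _ c m d Hm (cont_on_bd_right a b c d g Hc)).
  ring.
Qed.

Lemma rect_int_degen_x (g : Cx -> Cx) (a c d : R) : rect_int g a a c d = C0.
Proof. unfold rect_int. rewrite !CRInt_point. ring. Qed.

Lemma rect_int_degen_y (g : Cx -> Cx) (a b c : R) : rect_int g a b c c = C0.
Proof. unfold rect_int. rewrite !CRInt_point. ring. Qed.

Lemma cont_on_bd_Csum (F : nat -> Cx -> Cx) (a b c d : R) (N : nat) :
  (forall n, cont_on_bd (F n) a b c d) -> cont_on_bd (fun w => Csum (fun n => F n w) N) a b c d.
Proof.
  intros HF. induction N; cbn [Csum].
  - apply cont_on_bd_of_cont; intros; apply Ccont_const.
  - apply cont_on_bd_add; auto.
Qed.

(** * Goursat's lemma *)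

Lemma nested_intervals (an bn : nat -> R) :
  (forall n, an n <= an (S n)) -> (forall n, bn (S n) <= bn n) -> (forall n, an n <= bn n) ->
  exists p, forall n, an n <= p <= bn n.
Proof.
  intros Ha Hb Hab.
  assert (Ma : forall n k, an n <= an (k + n)%nat)
    by (intros n k; induction k; simpl; [lra | specialize (Ha (k+n)%nat); lra]).
  assert (Mb : forall n k, bn (k + n)%nat <= bn n)
    by (intros n k; induction k; simpl; [lra | specialize (Hb (k+n)%nat); lra]).
  assert (Hall : forall m n, an m <= bn n).
  { intros m n. destruct (Nat.le_ge_cases m n) as [H|H].
    - replace n with ((n - m) + m)%nat by lia. specialize (Ma m (n-m)%nat). specialize (Hab ((n-m)+m)%nat). lra.
    - replace m with ((m - n) + n)%nat by lia. specialize (Mb n (m-n)%nat). specialize (Hab ((m-n)+n)%nat). lra. }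
  destruct (completeness (fun x => exists n, x = an n)) as [p [Hp1 Hp2]].
  - exists (bn 0%nat). intros x [n ->]. apply Hall.
  - exists (an 0%nat), 0%nat; auto.
  - exists p. intros n. split.
    + apply Hp1. exists n; auto.
    + apply Hp2. intros x [m ->]. apply Hall.
Qed.

Record rect := mk_rect { ra : R; rb : R; rc : R; rd : R }.

Definition rect_valid (q : rect) : Prop := ra q <= rb q /\ rc q <= rd q.
Definition rect_int_q (g : Cx -> Cx) (q : rect) : Cx := rect_int g (ra q) (rb q) (rc q) (rd q).
Definition rect_sides (q : rect) : R := (rb q - ra q) + (rd q - rc q).

Definition mid_x (q : rect) : R := (ra q + rb q) / 2.
Definition mid_y (q : rect) : R := (rc q + rd q) / 2.
Definition quarter1 (q : rect) : rect := mk_rect (ra q) (mid_x q) (rc q) (mid_y q).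
Definition quarter2 (q : rect) : rect := mk_rect (mid_x q) (rb q) (rc q) (mid_y q).
Definition quarter3 (q : rect) : rect := mk_rect (ra q) (mid_x q) (mid_y q) (rd q).
Definition quarter4 (q : rect) : rect := mk_rect (mid_x q) (rb q) (mid_y q) (rd q).

Lemma rect_int_quarters (g : Cx -> Cx) (q : rect) :
  rect_valid q -> cont_on_rect g (ra q) (rb q) (rc q) (rd q) ->
  rect_int_q g q = Cadd (Cadd (rect_int_q g (quarter1 q)) (rect_int_q g (quarter2 q)))
                        (Cadd (rect_int_q g (quarter3 q)) (rect_int_q g (quarter4 q))).
Proof.
  destruct q as [a b c d]; intros [H1 H2] Hc.
  unfold rect_int_q, quarter1, quarter2, quarter3, quarter4, mid_x, mid_y in *; simpl in *.
  assert (Hsub : forall a' b' c' d', a <= a' -> b' <= b -> c <= c' -> d' <= d -> a' <= b' -> c' <= d' ->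
            cont_on_bd g a' b' c' d')
    by (intros; apply cont_on_rect_bd; auto; eapply cont_on_rect_sub; [| | | | apply Hc]; lra).
  rewrite (rect_int_split_x g a ((a+b)/2) b c d) by (try lra; apply Hsub; lra).
  rewrite (rect_int_split_y g a ((a+b)/2) c ((c+d)/2) d) by (try lra; apply Hsub; lra).
  rewrite (rect_int_split_y g ((a+b)/2) b c ((c+d)/2) d) by (try lra; apply Hsub; lra).
  ring.
Qed.

Definition bisect (g : Cx -> Cx) (q : rect) : rect :=
  let m := Cmod (rect_int_q g q) / 4 in
  if Rle_dec m (Cmod (rect_int_q g (quarter1 q))) then quarter1 q else
  if Rle_dec m (Cmod (rect_int_q g (quarter2 q))) then quarter2 q else
  if Rle_dec m (Cmod (rect_int_q g (quarter3 q))) then quarter3 q else quarter4 q.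

Lemma bisect_large (g : Cx -> Cx) (q : rect) :
  rect_valid q -> cont_on_rect g (ra q) (rb q) (rc q) (rd q) ->
  Cmod (rect_int_q g q) / 4 <= Cmod (rect_int_q g (bisect g q)).
Proof.
  intros Hv Hc. unfold bisect.
  destruct (Rle_dec _ _); auto. destruct (Rle_dec _ _); auto. destruct (Rle_dec _ _); auto.
  rewrite (rect_int_quarters g q Hv Hc) in n, n0, n1 |- *.
  pose proof (Cmod_add (Cadd (rect_int_q g (quarter1 q)) (rect_int_q g (quarter2 q)))
                       (Cadd (rect_int_q g (quarter3 q)) (rect_int_q g (quarter4 q)))).
  pose proof (Cmod_add (rect_int_q g (quarter1 q)) (rect_int_q g (quarter2 q))).
  pose proof (Cmod_add (rect_int_q g (quarter3 q)) (rect_int_q g (quarter4 q))). lra.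
Qed.

Lemma bisect_geom (g : Cx -> Cx) (q : rect) : rect_valid q ->
  let q' := bisect g q in
  ra q <= ra q' /\ rb q' <= rb q /\ rb q' - ra q' = (rb q - ra q) / 2 /\
  rc q <= rc q' /\ rd q' <= rd q /\ rd q' - rc q' = (rd q - rc q) / 2.
Proof.
  intros [H1 H2]. unfold bisect.
  destruct (Rle_dec _ _); [|destruct (Rle_dec _ _); [|destruct (Rle_dec _ _)]];
  unfold quarter1, quarter2, quarter3, quarter4, mid_x, mid_y; simpl; lra.
Qed.

Definition bisect_iter (g : Cx -> Cx) (q0 : rect) (n : nat) : rect := Nat.iter n (bisect g) q0.

Lemma bisect_iter_geom (g : Cx -> Cx) (q0 : rect) (n : nat) : rect_valid q0 ->
  let q := bisect_iter g q0 n in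
  ra q0 <= ra q /\ rb q <= rb q0 /\ rb q - ra q = (rb q0 - ra q0) * (/2)^n /\
  rc q0 <= rc q /\ rd q <= rd q0 /\ rd q - rc q = (rd q0 - rc q0) * (/2)^n.
Proof.
  intros [H1 H2]. induction n as [|n IH]; simpl; [lra|].
  destruct IH as [I1 [I2 [I3 [I4 [I5 I6]]]]].
  assert (Hv : rect_valid (bisect_iter g q0 n)) by (pose proof (pow_le (/2) n); split; nra).
  pose proof (bisect_geom g _ Hv) as G. simpl in G. unfold bisect_iter in *.
  destruct G as [G1 [G2 [G3 [G4 [G5 G6]]]]]. rewrite I3 in G3. rewrite I6 in G6.
  repeat split; lra.
Qed.

Lemma bisect_iter_valid (g : Cx -> Cx) (q0 : rect) (n : nat) :
  rect_valid q0 -> rect_valid (bisect_iter g q0 n).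
Proof.
  intros Hv. pose proof (bisect_iter_geom g q0 n Hv) as G. simpl in G.
  destruct Hv. pose proof (pow_le (/2) n). split; nra.
Qed.

Lemma bisect_iter_cont (g : Cx -> Cx) (q0 : rect) (n : nat) :
  rect_valid q0 -> cont_on_rect g (ra q0) (rb q0) (rc q0) (rd q0) ->
  let q := bisect_iter g q0 n in cont_on_rect g (ra q) (rb q) (rc q) (rd q).
Proof.
  intros Hv Hc. pose proof (bisect_iter_geom g q0 n Hv) as G. simpl in *.
  eapply cont_on_rect_sub; [| | | | apply Hc]; lra.
Qed.

Lemma bisect_iter_large (g : Cx -> Cx) (q0 : rect) (n : nat) :
  rect_valid q0 -> cont_on_rect g (ra q0) (rb q0) (rc q0) (rd q0) ->
  Cmod (rect_int_q g q0) * (/4)^n <= Cmod (rect_int_q g (bisect_iter g q0 n)).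
Proof.
  intros Hv Hc. induction n as [|n IH]; simpl; [lra|].
  eapply Rle_trans; [|apply bisect_large].
  - lra.
  - apply bisect_iter_valid; auto.
  - apply bisect_iter_cont; auto.
Qed.

Lemma bisect_iter_point (g : Cx -> Cx) (q0 : rect) : rect_valid q0 ->
  exists p : Cx, forall n, let q := bisect_iter g q0 n in
    ra q <= fst p <= rb q /\ rc q <= snd p <= rd q.
Proof.
  intros Hv.
  assert (Step : forall n, let q := bisect_iter g q0 n in let q' := bisect_iter g q0 (S n) in
    ra q <= ra q' /\ rb q' <= rb q /\ rc q <= rc q' /\ rd q' <= rd q)
    by (intros n; simpl; pose proof (bisect_geom g _ (bisect_iter_valid g q0 n Hv)); simpl in *; lra).
  destruct (nested_intervals (fun n => ra (bisect_iter g q0 n)) (fun n => rb (bisect_iter g q0 n)))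
    as [px Hpx]; try (intros n; apply Step); try (intros n; apply bisect_iter_valid; auto).
  destruct (nested_intervals (fun n => rc (bisect_iter g q0 n)) (fun n => rd (bisect_iter g q0 n)))
    as [py Hpy]; try (intros n; apply Step); try (intros n; apply bisect_iter_valid; auto).
  exists (px, py). intros n. split; [apply Hpx | apply Hpy].
Qed.

(* Near a point of differentiability [g] is its affine approximation, whose integral vanishes,
   up to an error [eps * |w - p|]. *)
Lemma rect_int_caratheodory_bound (g phi : Cx -> Cx) (p : Cx) (eps : R) (q : rect) :
  rect_valid q -> ra q <= fst p <= rb q -> rc q <= snd p <= rd q ->
  cont_on_rect g (ra q) (rb q) (rc q) (rd q) ->
  (forall w, Cmod (Csub w p) <= rect_sides q ->
     Csub (g w) (g p) = Cmul (phi w) (Csub w p) /\ Cmod (Csub (phi w) (phi p)) <= eps) ->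
  Cmod (rect_int_q g q) <= 2 * rect_sides q * (eps * rect_sides q).
Proof.
  destruct q as [a b c d]. unfold rect_valid, rect_int_q, rect_sides; simpl.
  intros [Hab Hcd] Hpx Hpy Hc Hphi.
  set (aff := fun w => Cadd (Csub (g p) (Cmul (phi p) p)) (Cmul (phi p) w)).
  replace (rect_int g a b c d) with (rect_int (fun w => Csub (g w) (aff w)) a b c d).
  2:{ rewrite rect_int_sub by (auto using cont_on_rect_bd; apply cont_on_bd_of_cont; intros; apply Ccont_affine).
      unfold aff. rewrite rect_int_affine by lra. ring. }
  apply rect_int_bound; auto.
  - apply cont_on_bd_add; [apply cont_on_rect_bd; auto|].
    apply cont_on_bd_of_cont. intros; apply Ccont_opp, Ccont_affine.
  - intros w Hw.
    assert (Hwp : Cmod (Csub w p) <= (b - a) + (d - c)).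
    { eapply Rle_trans; [apply Cmod_le_abs|]. destruct p as [px py]. unfold Csub, Cadd, Copp; simpl in *.
      apply Rplus_le_compat; apply Rabs_le; unfold on_bd in Hw; simpl in Hw; lra. }
    destruct (Hphi w Hwp) as [E Hle].
    replace (Csub (g w) (aff w)) with (Cmul (Csub (phi w) (phi p)) (Csub w p)).
    2:{ unfold aff. replace (g w) with (Cadd (Csub (g w) (g p)) (g p)) by ring. rewrite E. ring. }
    rewrite Cmod_mul. apply Rmult_le_compat; auto using Cmod_ge0.
Qed.

Theorem goursat (g : Cx -> Cx) (a b c d : R) : a <= b -> c <= d ->
  (forall x y, a <= x <= b -> c <= y <= d -> Cdifferentiable g (x, y)) -> rect_int g a b c d = C0.
Proof.
  intros Hab Hcd Hdiff.
  destruct (Cx_dec (rect_int g a b c d) C0) as [E|NE]; auto. exfalso.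
  set (q0 := mk_rect a b c d). set (Q := bisect_iter g q0).
  assert (Hv : rect_valid q0) by (split; simpl; lra).
  assert (Hc : cont_on_rect g a b c d) by (intros x y Hx Hy; apply Cdiff_cont; auto).
  destruct (bisect_iter_point g q0 Hv) as [p Hp].
  assert (Hp0 := Hp 0%nat). unfold bisect_iter, q0 in Hp0; simpl in Hp0.
  destruct (Cdiff_caratheodory g p) as [phi [Hphic Hid]].
  { destruct p as [px py]; simpl in Hp0; apply Hdiff; lra. }
  set (eta := Cmod (rect_int g a b c d)). assert (Heta : 0 < eta) by (apply Cmod_pos; auto).
  set (D := rect_sides q0). assert (HD : 0 <= D) by (unfold D, rect_sides; simpl; lra).
  set (eps := eta / (2 * D * D + 1)).
  assert (Heps : 0 < eps) by (unfold eps; apply Rdiv_lt_0_compat; nra).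
  destruct (near_and _ _ _ Hid (Hphic eps Heps)) as [r [Hr Hnear]].
  destruct (pow_lt_1_zero (/2) ltac:(rewrite Rabs_pos_eq; lra) (r / (D + 1)) ltac:(apply Rdiv_lt_0_compat; lra))
    as [N HN].
  specialize (HN N (le_n N)). rewrite Rabs_pos_eq in HN by (apply pow_le; lra).
  set (h := (/2)^N) in HN. assert (Hh : 0 < h) by (apply pow_lt; lra).
  assert (Hside : rect_sides (Q N) = D * h).
  { pose proof (bisect_iter_geom g q0 N Hv) as [_ [_ [G1 [_ [_ G2]]]]].
    unfold D, rect_sides, h, Q. rewrite G1, G2. ring. }
  assert (HDh : D * h < r).
  { apply Rle_lt_trans with ((D + 1) * h); [nra|].
    replace r with ((D + 1) * (r / (D + 1))) by (field; lra). apply Rmult_lt_compat_l; lra. }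
  assert (Bnd := rect_int_caratheodory_bound g phi p eps (Q N) (bisect_iter_valid g q0 N Hv)
                   (proj1 (Hp N)) (proj2 (Hp N)) (bisect_iter_cont g q0 N Hv Hc)).
  rewrite Hside in Bnd.
  assert (Big := bisect_iter_large g q0 N Hv Hc).
  replace ((/4)^N) with (h * h) in Big by (unfold h; rewrite <- Rpow_mult_distr; f_equal; field).
  fold eta in Big. unfold Q in Bnd.
  assert (eta * (h * h) <= (2 * D * D * eps) * (h * h)).
  { eapply Rle_trans; [apply Big|]. eapply Rle_trans.
    - apply Bnd. intros w Hw. destruct (Hnear w ltac:(lra)) as [E1 E2]. split; auto; lra.
    - right; ring. }
  assert (eta <= 2 * D * D * eps) by (apply Rmult_le_reg_r with (h * h); nra).
  pose proof (Rmult_div_succ_lt eta (2 * D * D) Heta ltac:(nra)). unfold eps in *. lra.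
Qed.

Lemma rect_int_zero_off_point (g : Cx -> Cx) (a b c d : R) (p : Cx) : a <= b -> c <= d ->
  (forall x y, a <= x <= b -> c <= y <= d -> (x, y) <> p -> Cdifferentiable g (x, y)) ->
  a = b \/ c = d \/ ~ (a <= fst p <= b /\ c <= snd p <= d) -> rect_int g a b c d = C0.
Proof.
  intros Hab Hcd Hd [->|[->|Hout]]; [apply rect_int_degen_x | apply rect_int_degen_y|].
  apply goursat; auto. intros x y Hx Hy. apply Hd; auto. intros <-. simpl in Hout. tauto.
Qed.

(* Cutting [[a, b] x [c, d]] along the lines through the sides of the small rectangle
   [[x1, x2] x [y1, y2]] around [p]: every other piece has a degenerate side or misses [p]. *)
Lemma rect_int_central (g : Cx -> Cx) (a b c d x1 x2 y1 y2 : R) (p : Cx) :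
  a <= x1 <= fst p -> fst p <= x2 <= b -> c <= y1 <= snd p -> snd p <= y2 <= d ->
  (x1 = a \/ x1 < fst p) -> (x2 = b \/ fst p < x2) -> (y1 = c \/ y1 < snd p) -> (y2 = d \/ snd p < y2) ->
  cont_on_rect g a b c d ->
  (forall x y, a <= x <= b -> c <= y <= d -> (x, y) <> p -> Cdifferentiable g (x, y)) ->
  rect_int g a b c d = rect_int g x1 x2 y1 y2.
Proof.
  intros Hx1 Hx2 Hy1 Hy2 Ex1 Ex2 Ey1 Ey2 Hc Hd.
  assert (Hbd : forall a' b' c' d', a <= a' -> b' <= b -> c <= c' -> d' <= d -> a' <= b' -> c' <= d' ->
            cont_on_bd g a' b' c' d')
    by (intros; apply cont_on_rect_bd; auto; eapply cont_on_rect_sub; [| | | | apply Hc]; lra).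
  assert (Hzero : forall a' b' c' d', a <= a' -> b' <= b -> c <= c' -> d' <= d -> a' <= b' -> c' <= d' ->
            a' = b' \/ c' = d' \/ ~ (a' <= fst p <= b' /\ c' <= snd p <= d') -> rect_int g a' b' c' d' = C0)
    by (intros; apply (rect_int_zero_off_point g a' b' c' d' p); auto; intros; apply Hd; auto; lra).
  rewrite (rect_int_split_x g a x1 b c d), (rect_int_split_x g x1 x2 b c d),
    (rect_int_split_y g x1 x2 c y1 d), (rect_int_split_y g x1 x2 y1 y2 d) by (try lra; apply Hbd; lra).
  rewrite (Hzero a x1 c d), (Hzero x2 b c d), (Hzero x1 x2 c y1), (Hzero x1 x2 y2 d)
    by (try lra; destruct Ex1, Ex2, Ey1, Ey2; lra).
  ring.
Qed.

Theorem goursat_except_point (g : Cx -> Cx) (a b c d : R) (p : Cx) : a <= b -> c <= d ->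
  cont_on_rect g a b c d ->
  (forall x y, a <= x <= b -> c <= y <= d -> (x, y) <> p -> Cdifferentiable g (x, y)) ->
  rect_int g a b c d = C0.
Proof.
  intros Hab Hcd Hc Hd.
  destruct (classic (a <= fst p <= b /\ c <= snd p <= d)) as [[Hpx Hpy]|Out].
  2:{ apply (rect_int_zero_off_point g a b c d p); auto. }
  destruct p as [px py]; simpl in Hpx, Hpy.
  destruct (Ccont_bounded g (px, py) (Hc px py Hpx Hpy)) as [del [Hdel HB]].
  set (K := Cmod (g (px, py)) + 1). assert (HK : 0 < K) by (pose proof (Cmod_ge0 (g (px,py))); unfold K; lra).
  assert (Small : forall t, 0 < t < del / 2 -> Cmod (rect_int g a b c d) <= 8 * t * K).
  { intros t Ht.
    rewrite (rect_int_central g a b c d (Rmax a (px - t)) (Rmin b (px + t)) (Rmax c (py - t)) (Rmin d (py + t)) (px, py));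
      simpl; auto; try (unfold Rmax, Rmin; repeat destruct Rle_dec; lra).
    eapply Rle_trans.
    - apply rect_int_bound; try (unfold Rmax, Rmin; repeat destruct Rle_dec; lra).
      + apply cont_on_rect_bd; try (unfold Rmax, Rmin; repeat destruct Rle_dec; lra).
        eapply cont_on_rect_sub; [| | | | apply Hc]; unfold Rmax, Rmin; repeat destruct Rle_dec; lra.
      + intros [wx wy] Hw. apply HB. eapply Rle_lt_trans; [apply Cmod_le_abs|].
        unfold on_bd, Csub, Cadd, Copp in *; simpl in *.
        assert (Rabs (wx + - px) <= t) by (apply Rabs_le; unfold Rmax, Rmin in Hw; repeat destruct Rle_dec; lra).
        assert (Rabs (wy + - py) <= t) by (apply Rabs_le; unfold Rmax, Rmin in Hw; repeat destruct Rle_dec; lra).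
        lra.
    - fold K. apply Rmult_le_compat_r; [lra|]. unfold Rmax, Rmin; repeat destruct Rle_dec; lra. }
  destruct (Cx_dec (rect_int g a b c d) C0) as [E|NE]; auto. exfalso.
  set (eta := Cmod (rect_int g a b c d)). assert (He : 0 < eta) by (apply Cmod_pos; auto).
  set (t := Rmin (del / 4) (eta / (16 * K))).
  assert (Ht : 0 < t) by (apply Rmin_glb_lt; [lra | apply Rdiv_lt_0_compat; lra]).
  assert (t <= eta / (16 * K)) by apply Rmin_r. assert (t <= del / 4) by apply Rmin_l.
  specialize (Small t ltac:(lra)). fold eta in Small.
  assert (8 * t * K <= eta / 2) by (replace (eta / 2) with (8 * (eta / (16 * K)) * K) by (field; lra); nra).
  lra.
Qed.

(** * Cauchy's formula and the Taylor expansion on a square *)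

Definition in_square (z : Cx) (s : R) (w : Cx) : Prop :=
  Rabs (fst w - fst z) <= s /\ Rabs (snd w - snd z) <= s.

Definition on_square_bd (z : Cx) (s : R) : Cx -> Prop :=
  on_bd (fst z - s) (fst z + s) (snd z - s) (snd z + s).

Definition square_int (g : Cx -> Cx) (z : Cx) (s : R) : Cx :=
  rect_int g (fst z - s) (fst z + s) (snd z - s) (snd z + s).

Lemma in_square_rect (z : Cx) (s x y : R) :
  fst z - s <= x <= fst z + s -> snd z - s <= y <= snd z + s -> in_square z s (x, y).
Proof. intros Hx Hy. split; simpl; apply Rabs_le; lra. Qed.

Lemma on_square_bd_in (z : Cx) (s : R) (w : Cx) : on_square_bd z s w -> in_square z s w.
Proof. destruct w; unfold on_square_bd, on_bd; simpl; intros Hw. apply in_square_rect; lra. Qed.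

Lemma on_square_bd_far (z : Cx) (s : R) (w : Cx) : on_square_bd z s w -> s <= Cmod (Csub w z).
Proof.
  destruct w as [x y], z as [zx zy]. unfold on_square_bd, on_bd; simpl.
  intros [[Hx [E|E]]|[Hy [E|E]]]; subst.
  - eapply Rle_trans; [|apply Cmod_snd]. simpl. rewrite Rabs_left1; lra.
  - eapply Rle_trans; [|apply Cmod_snd]. simpl. rewrite Rabs_right; lra.
  - eapply Rle_trans; [|apply Cmod_fst]. simpl. rewrite Rabs_left1; lra.
  - eapply Rle_trans; [|apply Cmod_fst]. simpl. rewrite Rabs_right; lra.
Qed.

Lemma on_square_bd_neq (z : Cx) (s : R) (w zeta : Cx) :
  Cmod (Csub zeta z) < s -> on_square_bd z s w -> w <> zeta.
Proof. intros Hz Hw ->. pose proof (on_square_bd_far z s zeta Hw). lra. Qed.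

Lemma cont_on_square_bd (g : Cx -> Cx) (z : Cx) (s : R) :
  (forall w, on_square_bd z s w -> Ccont g w) -> cont_on_bd g (fst z - s) (fst z + s) (snd z - s) (snd z + s).
Proof. intros H. split; intros t Ht; split; apply H; unfold on_square_bd, on_bd; simpl; lra. Qed.

Lemma Ccont_inv_sub (zeta w : Cx) : w <> zeta -> Ccont (fun u => Cinv (Csub u zeta)) w.
Proof.
  intros N. apply Ccont_inv; [apply Ccont_sub; [apply Ccont_id | apply Ccont_const]|].
  apply Csub_neq0; auto.
Qed.

Definition slope (h : Cx -> Cx) (zeta l : Cx) (w : Cx) : Cx :=
  if Cx_dec w zeta then l else Cmul (Csub (h w) (h zeta)) (Cinv (Csub w zeta)).

Lemma slope_off_center (h : Cx -> Cx) (zeta l w : Cx) : w <> zeta ->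
  near w (fun u => slope h zeta l u = Cmul (Csub (h u) (h zeta)) (Cinv (Csub u zeta))).
Proof.
  intros N. refine (near_mono _ _ _ _ (Ccont_neq _ _ zeta (Ccont_id w) N)). intros u Nu.
  unfold slope. destruct (Cx_dec u zeta); tauto.
Qed.

Lemma slope_Cdiff (h : Cx -> Cx) (zeta l w : Cx) :
  w <> zeta -> Cdifferentiable h w -> Cdifferentiable (slope h zeta l) w.
Proof.
  intros N Hw. eapply Cdiff_local; [apply slope_off_center; auto|].
  apply Cdiff_mul; [apply Cdiff_sub; auto using Cdiff_const|].
  apply Cdiff_inv; [apply Cdiff_sub; auto using Cdiff_id, Cdiff_const | apply Csub_neq0; auto].
Qed.

Lemma slope_cont_center (h phi : Cx -> Cx) (zeta : Cx) :
  caratheodory h zeta phi -> Ccont (slope h zeta (phi zeta)) zeta.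
Proof.
  intros [Hc Hid]. apply (Ccont_local phi); auto.
  refine (near_mono _ _ _ _ Hid). intros w E. unfold slope.
  destruct (Cx_dec w zeta) as [->|N]; auto.
  rewrite E. field. apply Csub_neq0; auto.
Qed.

Theorem cauchy_formula_square (h : Cx -> Cx) (z zeta : Cx) (s : R) : 0 < s ->
  (forall w, in_square z s w -> Cdifferentiable h w) -> Cmod (Csub zeta z) < s ->
  square_int (fun w => Cmul (h w) (Cinv (Csub w zeta))) z s =
  Cmul (h zeta) (square_int (fun w => Cinv (Csub w zeta)) z s).
Proof.
  intros Hs Hd Hz.
  assert (Hin : in_square z s zeta).
  { pose proof (Cmod_fst (Csub zeta z)); pose proof (Cmod_snd (Csub zeta z)).
    unfold in_square, Csub, Cadd, Copp in *; simpl in *. unfold Rminus. split; lra. }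
  destruct (Cdiff_caratheodory h zeta (Hd zeta Hin)) as [phi Hphi].
  set (g := slope h zeta (phi zeta)).
  assert (Hg0 : square_int g z s = C0).
  { apply goursat_except_point with zeta; try lra.
    - intros x y Hx Hy. destruct (Cx_dec (x, y) zeta) as [->|N].
      + apply slope_cont_center; auto.
      + apply Cdiff_cont, slope_Cdiff; auto. apply Hd, in_square_rect; lra.
    - intros x y Hx Hy N. apply slope_Cdiff; auto. apply Hd, in_square_rect; lra. }
  assert (Hbd : forall w, on_square_bd z s w -> w <> zeta) by (intros; eapply on_square_bd_neq; eauto).
  assert (Ch : forall w, on_square_bd z s w -> Ccont h w) by (intros; apply Cdiff_cont, Hd, on_square_bd_in; auto).
  assert (Cinv_bd : cont_on_bd (fun w => Cinv (Csub w zeta)) (fst z - s) (fst z + s) (snd z - s) (snd z + s))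
    by (apply cont_on_square_bd; intros; apply Ccont_inv_sub; auto).
  assert (E : square_int g z s = Csub (square_int (fun w => Cmul (h w) (Cinv (Csub w zeta))) z s)
                                      (Cmul (h zeta) (square_int (fun w => Cinv (Csub w zeta)) z s))).
  { assert (Cq : cont_on_bd (fun w => Cmul (h w) (Cinv (Csub w zeta)))
                   (fst z - s) (fst z + s) (snd z - s) (snd z + s)).
    { apply cont_on_square_bd. intros. apply Ccont_mul; [apply Ch | apply Ccont_inv_sub]; auto. }
    unfold square_int. rewrite <- rect_int_scal, <- rect_int_sub by (auto using cont_on_bd_scal; lra).
    apply rect_int_ext; try lra.
    - apply cont_on_square_bd. intros w Hw. apply Cdiff_cont, slope_Cdiff; auto. apply Hd, on_square_bd_in; auto.
    - intros w Hw. unfold g, slope. destruct (Cx_dec w zeta) as [E|_]; [exfalso; apply (Hbd w); auto|]. ring. }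
  rewrite Hg0 in E.
  match type of E with C0 = Csub ?A ?B => transitivity (Cadd (Csub A B) B); [ring | rewrite <- E; ring] end.
Qed.

Lemma cauchy_kernel_geometric (w z zeta : Cx) (N : nat) : Csub w z <> C0 -> Csub w zeta <> C0 ->
  Cinv (Csub w zeta) =
  Cadd (Csum (fun n => Cmul (Cpow (Csub zeta z) n) (Cinv (Cpow (Csub w z) (S n)))) N)
       (Cmul (Cmul (Cpow (Csub zeta z) N) (Cinv (Cpow (Csub w z) N))) (Cinv (Csub w zeta))).
Proof.
  intros H1 H2. induction N.
  - cbn [Csum Cpow]. field. split; auto. apply Cone_neq_C0.
  - cbn [Csum]. rewrite IHN at 1. pose proof (Cpow_neq0 _ N H1).
    cbn [Cpow]. field. repeat split; auto.
Qed.

Lemma Ccont_mul_inv_pow (u : Cx -> Cx) (z w : Cx) (n : nat) : Ccont u w -> w <> z ->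
  Ccont (fun v => Cmul (u v) (Cinv (Cpow (Csub v z) n))) w.
Proof.
  intros Hu N. apply Ccont_mul; auto.
  apply Ccont_inv; [apply Ccont_pow, Ccont_sub; [apply Ccont_id | apply Ccont_const]|].
  apply Cpow_neq0, Csub_neq0; auto.
Qed.

Definition taylor_coef (u : Cx -> Cx) (z : Cx) (s : R) (n : nat) : Cx :=
  square_int (fun w => Cmul (u w) (Cinv (Cpow (Csub w z) (S n)))) z s.

Section Taylor.
Variables (u : Cx -> Cx) (z zeta : Cx) (s M : R) (N : nat).
Hypothesis Hs : 0 < s.
Hypothesis Hu : forall w, on_square_bd z s w -> Ccont u w.
Hypothesis HM : forall w, on_square_bd z s w -> Cmod (u w) <= M.
Hypothesis Hzeta : Cmod (Csub zeta z) <= s / 2.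

Let x := Csub zeta z.

Lemma on_square_bd_far_half (w : Cx) : on_square_bd z s w -> s / 2 <= Cmod (Csub w zeta).
Proof.
  intros Hw. pose proof (on_square_bd_far z s w Hw). pose proof (Cmod_sub_triangle w zeta z). lra.
Qed.

Lemma on_square_bd_neq_center (w : Cx) : on_square_bd z s w -> w <> z.
Proof. intros Hw ->. pose proof (on_square_bd_far z s z Hw). rewrite Cmod_sub_diag in H. lra. Qed.

Lemma on_square_bd_neq_zeta (w : Cx) : on_square_bd z s w -> w <> zeta.
Proof. intros Hw ->. pose proof (on_square_bd_far_half zeta Hw). rewrite Cmod_sub_diag in H. lra. Qed.

Definition taylor_remainder (w : Cx) : Cx :=
  Cmul (u w) (Cmul (Cmul (Cpow x N) (Cinv (Cpow (Csub w z) N))) (Cinv (Csub w zeta))).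

Lemma taylor_remainder_bound (w : Cx) : on_square_bd z s w ->
  Cmod (taylor_remainder w) <= M * (Cmod x / s) ^ N * (2 / s).
Proof.
  intros Hw. pose proof (on_square_bd_far z s w Hw) as F1. pose proof (on_square_bd_far_half w Hw) as F2.
  pose proof (Csub_neq0 _ _ (on_square_bd_neq_center w Hw)) as N1.
  pose proof (Csub_neq0 _ _ (on_square_bd_neq_zeta w Hw)) as N2.
  unfold taylor_remainder. rewrite !Cmod_mul, !Cmod_inv, !Cmod_pow by (try apply Cpow_neq0; auto).
  pose proof (Cmod_ge0 x). pose proof (Cmod_ge0 (u w)). specialize (HM w Hw).
  assert (A : Cmod x ^ N * / Cmod (Csub w z) ^ N <= (Cmod x / s) ^ N).
  { rewrite <- pow_inv, <- Rpow_mult_distr. unfold Rdiv. apply pow_incr. split.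
    - apply Rmult_le_pos; auto. left; apply Rinv_0_lt_compat; lra.
    - apply Rmult_le_compat_l; auto. apply Rinv_le_contravar; lra. }
  assert (B : / Cmod (Csub w zeta) <= 2 / s)
    by (replace (2 / s) with (/ (s / 2)) by (field; lra); apply Rinv_le_contravar; lra).
  assert (0 <= Cmod x ^ N * / Cmod (Csub w z) ^ N)
    by (apply Rmult_le_pos; [apply pow_le; auto | left; apply Rinv_0_lt_compat, pow_lt; lra]).
  assert (0 <= / Cmod (Csub w zeta)) by (left; apply Rinv_0_lt_compat; lra).
  apply Rle_trans with (M * ((Cmod x ^ N * / Cmod (Csub w z) ^ N) * / Cmod (Csub w zeta))).
  - apply Rmult_le_compat_r; auto. apply Rmult_le_pos; auto.
  - rewrite (Rmult_assoc M ((Cmod x / s) ^ N)). apply Rmult_le_compat_l; [lra|]. apply Rmult_le_compat; auto.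
Qed.

Lemma taylor_expansion_bound :
  Cmod (Csub (square_int (fun w => Cmul (u w) (Cinv (Csub w zeta))) z s)
             (Csum (fun n => Cmul (Cpow x n) (taylor_coef u z s n)) N))
   <= 16 * M * (Cmod x / s) ^ N.
Proof.
  set (F := fun n w => Cmul (Cpow x n) (Cmul (u w) (Cinv (Cpow (Csub w z) (S n))))).
  assert (CF : forall n, cont_on_bd (F n) (fst z - s) (fst z + s) (snd z - s) (snd z + s)).
  { intros n. apply cont_on_square_bd. intros w Hw. apply Ccont_mul; [apply Ccont_const|].
    apply Ccont_mul_inv_pow; auto. apply on_square_bd_neq_center; auto. }
  assert (CR : cont_on_bd taylor_remainder (fst z - s) (fst z + s) (snd z - s) (snd z + s)).
  { apply cont_on_square_bd. intros w Hw. unfold taylor_remainder.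
    apply (Ccont_local (fun v => Cmul (Cmul (Cmul (u v) (Cpow x N)) (Cinv (Cpow (Csub v z) N)))
                                      (Cinv (Csub v zeta)))).
    - exists 1; split; [lra|]. intros; ring.
    - apply Ccont_mul; [|apply Ccont_inv_sub, on_square_bd_neq_zeta; auto].
      apply Ccont_mul_inv_pow; [apply Ccont_mul; auto using Ccont_const | apply on_square_bd_neq_center; auto]. }
  assert (E : square_int (fun w => Cmul (u w) (Cinv (Csub w zeta))) z s =
              square_int (fun w => Cadd (Csum (fun n => F n w) N) (taylor_remainder w)) z s).
  { apply rect_int_ext; try lra.
    - apply cont_on_square_bd. intros w Hw. apply Ccont_mul; auto. apply Ccont_inv_sub, on_square_bd_neq_zeta; auto.
    - intros w Hw. rewrite (cauchy_kernel_geometric w z zeta N) by (apply Csub_neq0;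
        first [apply on_square_bd_neq_center | apply on_square_bd_neq_zeta]; auto).
      unfold taylor_remainder. fold x.
      match goal with |- Cmul ?U (Cadd ?S ?T) = _ => transitivity (Cadd (Cmul U S) (Cmul U T)); [ring|] end.
      f_equal. rewrite <- Csum_mul_l. apply Csum_ext. intros; unfold F; ring. }
  unfold square_int in *. rewrite E, rect_int_add, rect_int_Csum by (auto using cont_on_bd_Csum; lra).
  replace (Csum (fun n => rect_int (F n) _ _ _ _) N) with (Csum (fun n => Cmul (Cpow x n) (taylor_coef u z s n)) N).
  2:{ apply Csum_ext. intros n. unfold F, taylor_coef, square_int. rewrite rect_int_scal; auto; try lra.
      apply cont_on_square_bd. intros w Hw. apply Ccont_mul_inv_pow; auto. apply on_square_bd_neq_center; auto. }
  match goal with |- Cmod (Csub (Cadd ?S ?T) ?S) <= _ => replace (Csub (Cadd S T) S) with T by ring end.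
  eapply Rle_trans; [apply rect_int_bound with (M := M * (Cmod x / s) ^ N * (2 / s)); auto; try lra|].
  - intros w Hw. apply taylor_remainder_bound; auto.
  - right. field. lra.
Qed.

End Taylor.

Lemma poisson_kernel_ge (p s : R) : 0 < s -> Rabs p <= s -> 1 / (2 * s) <= s / (p * p + s * s).
Proof.
  intros Hs Hp. assert (p * p <= s * s).
  { pose proof (Rabs_pos p). pose proof (Rsqr_abs p). unfold Rsqr in *. rewrite H0. nra. }
  assert (0 < p*p+s*s) by nra.
  replace (s / (p*p+s*s)) with (1/(2*s) + (s*s - p*p)/(2*s*(p*p+s*s))) by (field; split; nra).
  assert (0 <= (s*s - p*p)/(2*s*(p*p+s*s))).
  { unfold Rdiv; apply Rmult_le_pos; [lra| left; apply Rinv_0_lt_compat; nra]. }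
  lra.
Qed.

(* The exact value is [2 pi i]; the bound [4] is all that is needed to know it is not zero. *)
Lemma square_int_kernel_Im (z : Cx) (s : R) : 0 < s ->
  4 <= snd (square_int (fun w => Cinv (Csub w z)) z s).
Proof.
  intros Hs. destruct z as [zx zy]. unfold square_int; simpl fst; simpl snd.
  set (g := fun w => Cinv (Csub w (zx, zy))).
  assert (CB : cont_on_bd g (zx - s) (zx + s) (zy - s) (zy + s)).
  { apply (cont_on_square_bd g (zx, zy) s). intros w Hw. apply Ccont_inv_sub.
    apply (on_square_bd_neq (zx, zy) s w (zx, zy)); auto. rewrite Cmod_sub_diag; auto. }
  assert (Hx : forall x, zx - s <= x <= zx + s -> Rabs (x + - zx) <= s) by (intros; apply Rabs_le; lra).
  assert (Hy : forall y, zy - s <= y <= zy + s -> Rabs (y + - zy) <= s) by (intros; apply Rabs_le; lra).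
  assert (Hab : zx - s <= zx + s) by lra. assert (Hcd : zy - s <= zy + s) by lra.
  assert (I1 := CcontR_on_integrable_snd _ _ _ Hab (cont_on_bd_bottom _ _ _ _ g CB)).
  assert (I2 := CcontR_on_integrable_snd _ _ _ Hab (cont_on_bd_top _ _ _ _ g CB)).
  assert (I3 := CcontR_on_integrable_fst _ _ _ Hcd (cont_on_bd_left _ _ _ _ g CB)).
  assert (I4 := CcontR_on_integrable_fst _ _ _ Hcd (cont_on_bd_right _ _ _ _ g CB)).
  assert (J1 : 1 <= RInt (fun x => snd (g (x, zy - s))) (zx - s) (zx + s)).
  { replace 1 with (1/(2*s) * (zx + s - (zx - s))) by (field; lra). apply RInt_ge_const; auto; try lra.
    intros x Hxs. unfold g, Cinv, Csub, Cadd, Copp; simpl.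
    replace (zy - s + - zy) with (- s) by ring. replace (- - s) with s by ring.
    replace (-s * -s) with (s*s) by ring. apply poisson_kernel_ge; auto. }
  assert (J2 : RInt (fun x => snd (g (x, zy + s))) (zx - s) (zx + s) <= -1).
  { replace (-1) with (-(1/(2*s)) * (zx + s - (zx - s))) by (field; lra). apply RInt_le_const; auto; try lra.
    intros x Hxs. unfold g, Cinv, Csub, Cadd, Copp; simpl. replace (zy + s + - zy) with s by ring.
    pose proof (poisson_kernel_ge (x + - zx) s Hs (Hx x Hxs)). unfold Rdiv in *. lra. }
  assert (J3 : RInt (fun y => fst (g (zx - s, y))) (zy - s) (zy + s) <= -1).
  { replace (-1) with (-(1/(2*s)) * (zy + s - (zy - s))) by (field; lra). apply RInt_le_const; auto; try lra.
    intros y Hys. unfold g, Cinv, Csub, Cadd, Copp; simpl.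
    replace (zx - s + - zx) with (- s) by ring. replace (-s * -s) with (s*s) by ring.
    pose proof (poisson_kernel_ge (y + - zy) s Hs (Hy y Hys)). rewrite Rplus_comm. unfold Rdiv in *. lra. }
  assert (J4 : 1 <= RInt (fun y => fst (g (zx + s, y))) (zy - s) (zy + s)).
  { replace 1 with (1/(2*s) * (zy + s - (zy - s))) by (field; lra). apply RInt_ge_const; auto; try lra.
    intros y Hys. unfold g, Cinv, Csub, Cadd, Copp; simpl. replace (zx + s + - zx) with s by ring.
    rewrite Rplus_comm. apply poisson_kernel_ge; auto. }
  change (4 <= snd (rect_int g (zx - s) (zx + s) (zy - s) (zy + s))).
  replace (snd (rect_int g (zx - s) (zx + s) (zy - s) (zy + s))) with
    (RInt (fun x => snd (g (x, zy - s))) (zx - s) (zx + s) + RInt (fun y => fst (g (zx + s, y))) (zy - s) (zy + s)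
     - RInt (fun x => snd (g (x, zy + s))) (zx - s) (zx + s) - RInt (fun y => fst (g (zx - s, y))) (zy - s) (zy + s))
    by (unfold rect_int, CRInt, Csub, Cadd, Copp, Cmul, Ci; simpl; ring).
  lra.
Qed.

(** * The identity theorem *)

Lemma le_geometric_nonpos (A C t : R) : 0 <= t < 1 -> (forall N, A <= C * t ^ N) -> A <= 0.
Proof.
  intros Ht HA. destruct (Rle_dec A 0) as [|Hpos]; auto. exfalso.
  assert (HC : A <= C) by (specialize (HA 0%nat); simpl in HA; lra).
  destruct (pow_lt_1_zero t ltac:(rewrite Rabs_pos_eq; lra) (A / (C + 1)) ltac:(apply Rdiv_lt_0_compat; lra))
    as [N HN].
  specialize (HN N (le_n N)). rewrite Rabs_pos_eq in HN by (apply pow_le; lra).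
  specialize (HA N). pose proof (Rmult_div_succ_lt A C ltac:(lra) ltac:(lra)).
  assert (C * t ^ N <= C * (A / (C + 1))) by (apply Rmult_le_compat_l; lra). lra.
Qed.

(* The first nonzero coefficient would dominate the partial sums for small [x]. *)
Lemma coefs_vanish_of_accumulating (d : nat -> Cx) (C s : R) : 0 < s -> 0 <= C ->
  (forall eps, 0 < eps -> exists x, x <> C0 /\ Cmod x < eps /\
     forall N, Cmod (Csum (fun n => Cmul (Cpow x n) (d n)) N) <= C * (Cmod x / s) ^ N) ->
  forall m, d m = C0.
Proof.
  intros Hs HC Hacc m. induction m as [m IH] using lt_wf_ind.
  destruct (Cx_dec (d m) C0) as [E|NE]; auto. exfalso.
  set (eta := Cmod (d m)). assert (Heta : 0 < eta) by (apply Cmod_pos; auto).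
  assert (Hsm : 0 < s ^ m) by (apply pow_lt; auto).
  set (bound := eta * s ^ m / (C + 1)).
  assert (Hbound : 0 < bound) by (apply Rdiv_lt_0_compat; [apply Rmult_lt_0_compat|]; lra).
  destruct (Hacc (s * bound) ltac:(nra)) as [x [Nx [Hx Hb]]].
  specialize (Hb (S m)). cbn [Csum] in Hb. rewrite Csum_eq0 in Hb by (intros n Hn; rewrite IH by auto; ring).
  replace (Cadd C0 (Cmul (Cpow x m) (d m))) with (Cmul (Cpow x m) (d m)) in Hb by ring.
  rewrite Cmod_mul, Cmod_pow in Hb. fold eta in Hb.
  set (t := Cmod x / s) in Hb. assert (Ht : 0 < t) by (apply Rdiv_lt_0_compat; auto; apply Cmod_pos; auto).
  replace (Cmod x) with (t * s) in Hb, Hx by (unfold t; field; lra).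
  rewrite Rpow_mult_distr in Hb. simpl pow in Hb.
  assert (Htm : 0 < t ^ m) by (apply pow_lt; auto).
  assert (s ^ m * eta <= C * t) by (apply Rmult_le_reg_l with (t ^ m); auto; nra).
  assert (C * t <= C * bound) by (apply Rmult_le_compat_l; nra).
  pose proof (Rmult_div_succ_lt (eta * s ^ m) C ltac:(nra) HC). unfold bound in *. lra.
Qed.

Lemma square_int_kernel_neq0 (z zeta : Cx) (s : R) : 0 < s -> Cmod (Csub zeta z) < s / 8 ->
  square_int (fun w => Cinv (Csub w zeta)) z s <> C0.
Proof.
  intros Hs Hz E.
  assert (Hexp := taylor_expansion_bound (fun _ => Cone) z zeta s 1 1 Hs
                    (fun w _ => Ccont_const Cone w) (fun w _ => Req_le _ _ Cmod_Cone) ltac:(lra)).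
  cbn [Csum Cpow] in Hexp.
  replace (square_int (fun w => Cmul Cone (Cinv (Csub w zeta))) z s) with C0 in Hexp
    by (rewrite <- E; f_equal; apply functional_extensionality; intros; ring).
  replace (taylor_coef (fun _ => Cone) z s 0) with (square_int (fun w => Cinv (Csub w z)) z s) in Hexp
    by (unfold taylor_coef; f_equal; apply functional_extensionality; intros w; cbn [Cpow];
        replace (Cmul (Csub w z) Cone) with (Csub w z) by ring; ring).
  pose proof (square_int_kernel_Im z s Hs) as HIm.
  set (P := square_int (fun w => Cinv (Csub w z)) z s) in *.
  pose proof (Cmod_snd (Csub C0 (Cadd C0 (Cmul Cone P)))) as Hsnd.
  replace (snd (Csub C0 (Cadd C0 (Cmul Cone P)))) with (- snd P) in Hsnd
    by (unfold Csub, Cadd, Cmul, Copp, C0, Cone; simpl; ring).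
  rewrite Rabs_Ropp, Rabs_pos_eq in Hsnd by lra. simpl pow in Hexp.
  assert (16 * 1 * (Cmod (Csub zeta z) / s * 1) < 2)
    by (replace (16 * 1 * (Cmod (Csub zeta z) / s * 1)) with (16 * Cmod (Csub zeta z) / s) by (field; lra);
        apply Rmult_lt_reg_r with s; auto; unfold Rdiv; rewrite Rmult_assoc, Rinv_l; lra).
  lra.
Qed.

Theorem vanish_near_of_accumulating_zeros (h : Cx -> Cx) (z : Cx) (s : R) : 0 < s ->
  (forall w, in_square z s w -> Cdifferentiable h w) ->
  (forall eps, 0 < eps -> exists w, w <> z /\ Cmod (Csub w z) < eps /\ h w = C0) ->
  near z (fun w => h w = C0).
Proof.
  intros Hs Hd Hacc.
  assert (Hh : forall w, on_square_bd z s w -> Ccont h w)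
    by (intros; apply Cdiff_cont, Hd, on_square_bd_in; auto).
  destruct (cont_on_bd_bounded (fst z - s) (fst z + s) (snd z - s) (snd z + s) h ltac:(lra) ltac:(lra)
              (cont_on_square_bd h z s Hh)) as [M [HM0 HM]].
  set (H := fun zeta => square_int (fun w => Cmul (h w) (Cinv (Csub w zeta))) z s).
  assert (Cau : forall zeta, Cmod (Csub zeta z) <= s / 2 ->
             H zeta = Cmul (h zeta) (square_int (fun w => Cinv (Csub w zeta)) z s))
    by (intros; apply cauchy_formula_square; auto; lra).
  assert (Exp : forall zeta N, Cmod (Csub zeta z) <= s / 2 ->
     Cmod (Csub (H zeta) (Csum (fun n => Cmul (Cpow (Csub zeta z) n) (taylor_coef h z s n)) N))
       <= 16 * M * (Cmod (Csub zeta z) / s) ^ N)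
    by (intros; apply taylor_expansion_bound; auto).
  assert (Coef : forall n, taylor_coef h z s n = C0).
  { apply (coefs_vanish_of_accumulating _ (16 * M) s); auto; try lra.
    intros eps Heps. destruct (Hacc (Rmin eps (s / 2)) ltac:(apply Rmin_glb_lt; lra)) as [w [Nw [Hw Hw0]]].
    exists (Csub w z). split; [apply Csub_neq0; auto|]. split; [eapply Rlt_Rmin_l; eauto|].
    intros N. assert (Hw2 : Cmod (Csub w z) <= s / 2) by (apply Rlt_le; eapply Rlt_Rmin_r; eauto).
    specialize (Exp w N Hw2). rewrite Cau, Hw0 in Exp by auto.
    match type of Exp with Cmod (Csub (Cmul C0 ?P) ?S) <= _ =>
      replace (Csub (Cmul C0 P) S) with (Copp S) in Exp by ring end.
    rewrite Cmod_opp in Exp. auto. }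
  exists (s / 8). split; [lra|]. intros zeta Hz.
  assert (HZ : H zeta = C0).
  { destruct (Cx_dec (H zeta) C0) as [E|NE]; auto. exfalso.
    assert (Cmod (H zeta) <= 0); [|pose proof (Cmod_pos _ NE); lra].
    apply (le_geometric_nonpos _ (16 * M) (Cmod (Csub zeta z) / s)).
    - split; [apply Rmult_le_pos; [apply Cmod_ge0 | left; apply Rinv_0_lt_compat; lra]|].
      apply Rmult_lt_reg_r with s; auto. unfold Rdiv. rewrite Rmult_assoc, Rinv_l; lra.
    - intros N. specialize (Exp zeta N ltac:(lra)).
      rewrite Csum_eq0 in Exp by (intros n _; rewrite Coef; ring).
      replace (Csub (H zeta) C0) with (H zeta) in Exp by ring. auto. }
  rewrite Cau in HZ by lra. exact (Cmul_eq0_l _ _ HZ (square_int_kernel_neq0 z zeta s Hs Hz)).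
Qed.

Lemma Cdomain_propagate (D U : Cx -> Prop) : Cdomain D ->
  (forall z, U z -> near z U) ->
  (forall y, D y -> (forall r, 0 < r -> exists w, Cmod (Csub w y) < r /\ U w) -> U y) ->
  (exists z0, D z0 /\ U z0) -> forall z, D z -> U z.
Proof.
  intros [_ [_ Dconn]] Uopen Uclosed Hz0 z Dz.
  set (V := fun y => near y (fun w => ~ U w)).
  assert (Cover : forall y, D y -> U y \/ V y).
  { intros y Dy. destruct (classic (V y)) as [HV|HV]; [right; auto|left].
    apply Uclosed; auto. intros r Hr. apply NNPP. intros C. apply HV.
    exists r. split; auto. intros w Hw Uw. apply C. exists w; auto. }
  apply NNPP. intros NUz. apply (Dconn U V).
  - intros y Uy. exact (Uopen y Uy).
  - intros y Vy. exact (near_open _ _ Vy).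
  - exact Cover.
  - intros y _ Uy Vy. exact (near_self _ _ Vy Uy).
  - exact Hz0.
  - exists z. split; auto. destruct (Cover z Dz); tauto.
Qed.

Lemma accumulating_of_adherent (y : Cx) (P : Cx -> Prop) :
  (forall r, 0 < r -> exists w, Cmod (Csub w y) < r /\ near w P) ->
  forall eps, 0 < eps -> exists w, w <> y /\ Cmod (Csub w y) < eps /\ P w.
Proof.
  intros Hadh eps Heps. destruct (Hadh (eps / 2) ltac:(lra)) as [w [Hw [rw [Hrw HP]]]].
  destruct (Cx_dec w y) as [->|N].
  - destruct (exists_near_neq y (Rmin (eps / 2) rw) ltac:(apply Rmin_glb_lt; lra)) as [w' [N' Hw']].
    exists w'. repeat split; auto.
    + apply Rlt_Rmin_l in Hw'. lra.
    + apply HP. eapply Rlt_Rmin_r; eauto.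
  - exists w. repeat split; auto; [lra|]. apply HP. rewrite Cmod_sub_diag; auto.
Qed.

Lemma in_square_Cmod (z w : Cx) (s : R) : in_square z s w -> Cmod (Csub w z) <= 2 * s.
Proof.
  intros [H1 H2]. eapply Rle_trans; [apply Cmod_le_abs|].
  unfold Csub, Cadd, Copp; simpl. unfold Rminus in *. lra.
Qed.

Lemma not_pole_of_accumulating (f : Cx -> Cx) (y k : Cx) :
  (forall eps, 0 < eps -> exists w, w <> y /\ Cmod (Csub w y) < eps /\ f w = k) -> ~ pole f y.
Proof.
  intros Hacc Hp. destruct (Hp (Cmod k)) as [del [Hdel Hfar]].
  destruct (Hacc del Hdel) as [w [N [Hw E]]]. specialize (Hfar w N Hw). rewrite E in Hfar. lra.
Qed.

Lemma near_const_of_accumulating (D : Cx -> Prop) (f : Cx -> Cx) (y k : Cx) :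
  Copen D -> meromorphic D f -> D y ->
  (forall eps, 0 < eps -> exists w, w <> y /\ Cmod (Csub w y) < eps /\ f w = k) ->
  near y (fun w => f w = k).
Proof.
  intros Dop Mf Dy Hacc.
  destruct (mero_regular_near D f y Dop Mf Dy (not_pole_of_accumulating f y k Hacc)) as [r [Hr Hreg]].
  assert (Hvan : near y (fun w => Csub (f w) k = C0)).
  { apply (vanish_near_of_accumulating_zeros _ y (r / 4)); [lra| |].
    - intros w Hw. apply Cdiff_sub; [|apply Cdiff_const]. apply Hreg.
      pose proof (in_square_Cmod y w (r / 4) Hw). lra.
    - intros eps Heps. destruct (Hacc eps Heps) as [w [N [Hw E]]]. exists w. repeat split; auto.
      rewrite E; ring. }
  refine (near_mono _ _ _ _ Hvan). intros w E.
  replace (f w) with (Cadd (Csub (f w) k) k) by ring. rewrite E; ring.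
Qed.

Theorem mero_identity (D : Cx -> Prop) (f : Cx -> Cx) (k z0 : Cx) :
  Cdomain D -> meromorphic D f -> D z0 -> near z0 (fun w => f w = k) ->
  forall z, D z -> f z = k.
Proof.
  intros HD Mf Dz0 Hz0 z Dz.
  apply (near_self z (fun w => f w = k)).
  apply (Cdomain_propagate D (fun y => near y (fun w => f w = k))); eauto.
  - intros y Hy. exact (near_open _ _ Hy).
  - intros y Dy Hadh. apply (near_const_of_accumulating D); auto; [apply HD|].
    apply accumulating_of_adherent; auto.
Qed.

(** * Holomorphic functions with values on a line *)

(* [cross u c = 0] iff [u] is a real multiple of [c] (for [c <> 0]). *)
Definition cross (u c : Cx) : R := snd u * fst c - fst u * snd c.

Lemma cross_bound (u c : Cx) : Rabs (cross u c) <= 2 * Cmod u * Cmod c.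
Proof.
  unfold cross. eapply Rle_trans; [apply Rabs_triang|]. rewrite Rabs_Ropp, !Rabs_mult.
  pose proof (Cmod_fst u); pose proof (Cmod_snd u); pose proof (Cmod_fst c); pose proof (Cmod_snd c).
  pose proof (Rabs_pos (fst u)); pose proof (Rabs_pos (snd u)); pose proof (Rabs_pos (fst c)); pose proof (Rabs_pos (snd c)).
  assert (Rabs (snd u) * Rabs (fst c) <= Cmod u * Cmod c) by (apply Rmult_le_compat; auto).
  assert (Rabs (fst u) * Rabs (snd c) <= Cmod u * Cmod c) by (apply Rmult_le_compat; auto). lra.
Qed.

Lemma cross_sub (u v c : Cx) : cross (Csub u v) c = cross u c - cross v c.
Proof. unfold cross, Csub, Cadd, Copp; simpl; ring. Qed.

Lemma cross_RC_mul (r : R) (u c : Cx) : cross (Cmul (RC r) u) c = r * cross u c.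
Proof. unfold cross, Cmul, RC; simpl; ring. Qed.

Lemma cross_near_neq0 (h : Cx -> Cx) (p c : Cx) :
  Ccont h p -> cross (h p) c <> 0 -> near p (fun w => cross (h w) c <> 0).
Proof.
  intros Hh Hp. set (eta := Rabs (cross (h p) c)). assert (Heta : 0 < eta) by (apply Rabs_pos_lt; auto).
  pose proof (Cmod_ge0 c).
  refine (near_mono _ _ _ _ (Hh (eta / (2 * Cmod c + 1)) ltac:(apply Rdiv_lt_0_compat; lra))).
  intros w Hw E. pose proof (cross_bound (Csub (h w) (h p)) c) as B.
  rewrite cross_sub, E, Rminus_0_l, Rabs_Ropp in B. fold eta in B.
  assert (2 * Cmod (Csub (h w) (h p)) * Cmod c <= eta / (2 * Cmod c + 1) * (2 * Cmod c))
    by (rewrite (Rmult_comm 2), Rmult_assoc; apply Rmult_le_compat_r; lra).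
  pose proof (Rmult_div_succ_lt eta (2 * Cmod c) Heta ltac:(lra)). lra.
Qed.

(* Moving from [p] in direction [e], the increments of [f] lie on the line, hence so does
   the derivative in that direction. *)
Lemma caratheodory_cross_dir (f phi : Cx -> Cx) (p c e : Cx) :
  caratheodory f p phi -> near p (fun w => cross (f w) c = 0) -> e <> C0 ->
  cross (Cmul (phi p) e) c = 0.
Proof.
  intros [Hc Hid] Hcr Ne. apply NNPP. intros Hne.
  assert (Hphi : Ccont (fun w => Cmul (phi w) e) p) by (apply Ccont_mul; auto using Ccont_const).
  destruct (near_and _ _ _ (cross_near_neq0 _ p c Hphi Hne) (near_and _ _ _ Hid Hcr)) as [r [Hr Hnear]].
  pose proof (Cmod_pos e Ne) as He.
  set (t := r / (2 * Cmod e)). assert (Ht : 0 < t) by (apply Rdiv_lt_0_compat; lra).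
  set (w := Cadd p (Cmul (RC t) e)).
  assert (Hwp : Csub w p = Cmul (RC t) e) by (unfold w; ring).
  assert (Hw : Cmod (Csub w p) < r).
  { rewrite Hwp, Cmod_mul, Cmod_RC, Rabs_pos_eq by lra. unfold t. field_simplify; lra. }
  destruct (Hnear w Hw) as [N1 [E1 C1]]. destruct (Hnear p ltac:(rewrite Cmod_sub_diag; lra)) as [_ [_ C2]].
  apply N1. apply (Rmult_eq_reg_l t); [|lra]. rewrite <- cross_RC_mul, Rmult_0_r.
  replace (Cmul (RC t) (Cmul (phi w) e)) with (Cmul (phi w) (Csub w p)) by (rewrite Hwp; ring).
  rewrite <- E1, cross_sub, C1, C2. ring.
Qed.

Lemma caratheodory_cross_deriv_zero (f phi : Cx -> Cx) (p c : Cx) : c <> C0 ->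
  caratheodory f p phi -> near p (fun w => cross (f w) c = 0) -> phi p = C0.
Proof.
  intros Nc Hphi Hcr.
  pose proof (caratheodory_cross_dir f phi p c Cone Hphi Hcr Cone_neq_C0) as D1.
  pose proof (caratheodory_cross_dir f phi p c Ci Hphi Hcr ltac:(intro E; injection E; lra)) as D2.
  pose proof (Cnorm2_pos c Nc) as Hc2.
  unfold cross, Cmul, Cone, Ci in D1, D2; simpl in D1, D2.
  destruct (phi p) as [u v], c as [c1 c2]. simpl in *.
  assert (L1 : v * c1 - u * c2 = 0) by (rewrite <- D1; ring).
  assert (L2 : u * c1 + v * c2 = 0) by (rewrite <- D2; ring).
  assert (E1 : u * (c1*c1+c2*c2) = 0)
    by (replace (u * (c1*c1+c2*c2)) with (c1 * (u*c1 + v*c2) - c2 * (v*c1 - u*c2)) by ring; rewrite L1, L2; ring).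
  assert (E2 : v * (c1*c1+c2*c2) = 0)
    by (replace (v * (c1*c1+c2*c2)) with (c1 * (v*c1 - u*c2) + c2 * (u*c1 + v*c2)) by ring; rewrite L1, L2; ring).
  apply Rmult_integral in E1, E2. apply Cpair_eq. lra.
Qed.

Lemma derivable_proj_segment (pr : Cx -> R) (f phi : Cx -> Cx) (z1 v : Cx) (t : R) :
  (forall u w, pr (Csub u w) = pr u - pr w) -> (forall r u, pr (Cmul (RC r) u) = r * pr u) ->
  (forall u, Rabs (pr u) <= Cmod u) ->
  caratheodory f (Cadd z1 (Cmul (RC t) v)) phi -> phi (Cadd z1 (Cmul (RC t) v)) = C0 ->
  derivable_pt_lim (fun s => pr (f (Cadd z1 (Cmul (RC s) v)))) t 0.
Proof.
  set (p := Cadd z1 (Cmul (RC t) v)). intros Psub Pscal Pabs [Hc Hid] H0 e He.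
  set (V := Cmod v + 1). assert (HV : 0 < V) by (pose proof (Cmod_ge0 v); unfold V; lra).
  destruct (near_and _ _ _ (Hc (e / V) ltac:(apply Rdiv_lt_0_compat; auto)) Hid) as [r [Hr Hnear]].
  assert (Hd : 0 < r / V) by (apply Rdiv_lt_0_compat; auto).
  exists (mkposreal _ Hd). intros h Hh Hhd. simpl in Hhd. cbv beta.
  replace (Cadd z1 (Cmul (RC (t + h)) v)) with (Cadd p (Cmul (RC h) v))
    by (unfold p; apply Cx_eq; unfold Cadd, Cmul, RC; simpl; ring).
  set (w := Cadd p (Cmul (RC h) v)).
  assert (Hwp : Csub w p = Cmul (RC h) v) by (unfold w; ring).
  assert (Hw : Cmod (Csub w p) < r).
  { rewrite Hwp, Cmod_mul, Cmod_RC. pose proof (Cmod_ge0 v). pose proof (Rabs_pos h).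
    apply Rle_lt_trans with (Rabs h * V); [unfold V; nra|].
    replace r with (r / V * V) by (field; lra). apply Rmult_lt_compat_r; auto. }
  destruct (Hnear w Hw) as [Hphi E].
  fold p. rewrite <- Psub, E, Hwp.
  replace (Cmul (phi w) (Cmul (RC h) v)) with (Cmul (RC h) (Cmul (phi w) v)) by ring.
  rewrite Pscal. replace (h * pr (Cmul (phi w) v) / h - 0) with (pr (Cmul (phi w) v)) by (field; auto).
  eapply Rle_lt_trans; [apply Pabs|]. rewrite Cmod_mul.
  replace (phi w) with (Csub (phi w) (phi p)) by (rewrite H0; ring).
  pose proof (Cmod_ge0 v). pose proof (Cmod_ge0 (Csub (phi w) (phi p))).
  apply Rle_lt_trans with (e / V * Cmod v); [apply Rmult_le_compat_r; lra|].
  replace (e / V * Cmod v) with (e / (Cmod v + 1) * Cmod v) by reflexivity.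
  apply Rmult_div_succ_lt; auto.
Qed.

(* The derivative vanishes on the disc, so [f] is constant along each segment from [z1]. *)
Theorem const_on_ball_of_cross_zero (f : Cx -> Cx) (c z1 : Cx) (rho : R) : c <> C0 ->
  (forall w, Cmod (Csub w z1) < rho -> Cdifferentiable f w /\ cross (f w) c = 0) ->
  forall w, Cmod (Csub w z1) < rho -> f w = f z1.
Proof.
  intros Nc Hf w Hw.
  set (v := Csub w z1). set (P := fun t => Cadd z1 (Cmul (RC t) v)).
  assert (HP : forall t, 0 <= t <= 1 -> Cmod (Csub (P t) z1) < rho).
  { intros t Ht. unfold P. replace (Csub (Cadd z1 (Cmul (RC t) v)) z1) with (Cmul (RC t) v) by ring.
    rewrite Cmod_mul, Cmod_RC, Rabs_pos_eq by lra. fold v in Hw. pose proof (Cmod_ge0 v). nra. }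
  assert (Const : forall pr : Cx -> R, (forall u w, pr (Csub u w) = pr u - pr w) ->
     (forall r u, pr (Cmul (RC r) u) = r * pr u) -> (forall u, Rabs (pr u) <= Cmod u) ->
     pr (f (P 1)) = pr (f (P 0))).
  { intros pr P1 P2 P3.
    assert (HD : forall t, 0 <= t <= 1 -> derivable_pt_lim (fun t => pr (f (P t))) t 0).
    { intros t Ht. destruct (Cdiff_caratheodory f (P t) (proj1 (Hf _ (HP t Ht)))) as [phi Hphi].
      apply (derivable_proj_segment pr f phi z1 v t); auto.
      apply (caratheodory_cross_deriv_zero f phi (P t) c Nc Hphi).
      apply (near_in_ball z1 (P t) rho); auto. intros; apply Hf; auto. }
    apply (null_derivative_loc (fun t => pr (f (P t))) 0 1
             (fun x Hx => exist _ 0 (HD x (conj (Rlt_le _ _ (proj1 Hx)) (Rlt_le _ _ (proj2 Hx)))))); try lra.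
    - intros x Hx. apply derivable_continuous_pt. exists 0. apply HD; auto.
    - intros x Hx. reflexivity. }
  replace w with (P 1) by (unfold P, v; apply Cx_eq; unfold Cadd, Cmul, RC, Csub, Copp; simpl; ring).
  assert (E0 : P 0 = z1) by (unfold P, v; apply Cx_eq; unfold Cadd, Cmul, RC, Csub, Copp; simpl; ring).
  rewrite <- E0. apply Cx_eq.
  - apply (Const fst); [intros; unfold Csub, Cadd, Copp; simpl; ring | intros; unfold Cmul, RC; simpl; ring | apply Cmod_fst].
  - apply (Const snd); [intros; unfold Csub, Cadd, Copp; simpl; ring | intros; unfold Cmul, RC; simpl; ring | apply Cmod_snd].
Qed.

(** * Phases *)

Definition unit_dir (u : Cx) : Cx := Cscale (/ Cmod u) u.

Lemma phase_shift (h : Cx -> Cx) (c z : Cx) : phase (Cshift h c) z = unit_dir (Cadd (h z) c).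
Proof. reflexivity. Qed.

Lemma unit_dir_eq (u v : Cx) : u <> C0 -> v <> C0 -> unit_dir u = unit_dir v ->
  u = Cscale (Cmod u / Cmod v) v.
Proof.
  intros Nu Nv E. pose proof (Cmod_pos u Nu). pose proof (Cmod_pos v Nv).
  unfold unit_dir, Cscale in E. apply Cpair_eq in E as [E1 E2].
  apply Cx_eq; unfold Cscale; simpl.
  - replace (fst u) with (Cmod u * (/ Cmod u * fst u)) by (field; lra). rewrite E1. field; lra.
  - replace (snd u) with (Cmod u * (/ Cmod u * snd u)) by (field; lra). rewrite E2. field; lra.
Qed.

Lemma same_dir_shift_cross_zero (a b c : Cx) : c <> C0 -> a <> b -> a <> C0 -> b <> C0 ->
  Cadd a c <> C0 -> Cadd b c <> C0 ->
  unit_dir a = unit_dir b -> unit_dir (Cadd a c) = unit_dir (Cadd b c) -> cross a c = 0.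
Proof.
  intros Nc Nab Na Nb Nac Nbc E1 E2.
  apply unit_dir_eq in E1; auto. apply unit_dir_eq in E2; auto.
  set (t := Cmod a / Cmod b) in *. set (s := Cmod (Cadd a c) / Cmod (Cadd b c)) in *. clearbody t s.
  destruct a as [a1 a2], b as [b1 b2], c as [c1 c2].
  unfold Cscale, Cadd in E1, E2; simpl in E1, E2. apply Cpair_eq in E1 as [A1 A2]. apply Cpair_eq in E2 as [B1 B2].
  unfold cross; simpl.
  assert (K1 : (t - s) * b1 = (s - 1) * c1) by nra. assert (K2 : (t - s) * b2 = (s - 1) * c2) by nra.
  assert (K : (t - s) * (b2 * c1 - b1 * c2) = 0).
  { replace ((t - s) * (b2 * c1 - b1 * c2)) with (((t - s) * b2) * c1 - ((t - s) * b1) * c2) by ring.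
    rewrite K1, K2. ring. }
  apply Rmult_integral in K. destruct K as [K|K].
  - exfalso. assert (s = t) by lra. subst s. rewrite K in *.
    assert (H1 : (t - 1) * c1 = 0) by nra. assert (H2 : (t - 1) * c2 = 0) by nra.
    destruct (Req_dec t 1) as [T|T].
    + apply Nab. rewrite T in A1, A2. apply Cpair_eq. lra.
    + apply Nc. apply Rmult_integral in H1, H2. apply Cpair_eq. lra.
  - replace (a2 * c1 - a1 * c2) with (t * (b2 * c1 - b1 * c2)) by (rewrite A1, A2; ring). rewrite K; ring.
Qed.

Lemma unit_dir_mul_neq (u e1 e2 : Cx) : u <> C0 -> e1 <> C0 -> e2 <> C0 ->
  (forall r, e1 <> Cscale r e2) -> unit_dir (Cmul u e1) <> unit_dir (Cmul u e2).
Proof.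
  intros Nu N1 N2 Hr E. apply unit_dir_eq in E; try apply Cmul_neq0; auto.
  set (r := Cmod (Cmul u e1) / Cmod (Cmul u e2)) in E. clearbody r. apply (Hr r).
  replace e1 with (Cmul (Cinv u) (Cmul u e1)) by (field; auto). rewrite E.
  pose proof (Cnorm2_pos u Nu). apply Cx_eq; unfold Cscale, Cmul, Cinv; simpl; field; lra.
Qed.

(* With [d = a - b], a shift [c = -a + i d] (or [-a - i d]) turns [a, b] into [i d, (i - 1) d]
   (or [-i d, -(1 + i) d]), which point in different directions. *)
Lemma exists_shift_separating_dirs (a b : Cx) : a <> b ->
  exists c, c <> C0 /\ Cadd a c <> C0 /\ Cadd b c <> C0 /\ unit_dir (Cadd a c) <> unit_dir (Cadd b c).
Proof.
  intros Nab. set (d := Csub a b). assert (Nd : d <> C0) by (apply Csub_neq0; auto).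
  assert (NZ : forall p q : R, p <> 0 \/ q <> 0 -> (p, q) <> C0) by (intros p q Hp E; apply Cpair_eq in E; lra).
  destruct (Cx_dec (Cadd (Copp a) (Cmul d Ci)) C0) as [E1|N1].
  - exists (Csub (Copp a) (Cmul d Ci)).
    replace (Cadd a (Csub (Copp a) (Cmul d Ci))) with (Cmul d (0, -1))
      by (replace ((0, -1) : Cx) with (Copp Ci) by (apply Cx_eq; unfold Copp, Ci; simpl; ring); ring).
    replace (Cadd b (Csub (Copp a) (Cmul d Ci))) with (Cmul d (-1, -1))
      by (replace ((-1, -1) : Cx) with (Copp (Cadd Cone Ci))
            by (apply Cx_eq; unfold Cadd, Copp, Cone, Ci; simpl; ring); unfold d; ring).
    repeat split; try (apply Cmul_neq0; auto; apply NZ; lra).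
    + intro E2. apply Nd, (Cmul_eq0_l _ (Cmul (Cadd Cone Cone) Ci)).
      * transitivity (Csub (Cadd (Copp a) (Cmul d Ci)) (Csub (Copp a) (Cmul d Ci))); [ring|].
        rewrite E1, E2. ring.
      * apply NZ. unfold Cmul, Cadd, Cone, Ci; simpl. lra.
    + apply unit_dir_mul_neq; auto; try (apply NZ; lra).
      intros r E. unfold Cscale in E. apply Cpair_eq in E. simpl in E. lra.
  - exists (Cadd (Copp a) (Cmul d Ci)).
    replace (Cadd a (Cadd (Copp a) (Cmul d Ci))) with (Cmul d (0, 1)) by (unfold Ci; ring).
    replace (Cadd b (Cadd (Copp a) (Cmul d Ci))) with (Cmul d (-1, 1))
      by (replace ((-1, 1) : Cx) with (Csub Ci Cone) by (apply Cx_eq; unfold Csub, Cadd, Copp, Cone, Ci; simpl; ring);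
          unfold d; ring).
    repeat split; auto; try (apply Cmul_neq0; auto; apply NZ; lra).
    apply unit_dir_mul_neq; auto; try (apply NZ; lra).
    intros r E. unfold Cscale in E. apply Cpair_eq in E. simpl in E. lra.
Qed.

Lemma pole_shift (f : Cx -> Cx) (c z : Cx) : pole (Cshift f c) z <-> pole f z.
Proof.
  unfold pole, Cshift. split; intros H M; destruct (H (M + Cmod c)) as [d [Hd H']];
    exists d; split; auto; intros w Nw Hw; specialize (H' w Nw Hw).
  - pose proof (Cmod_sub_ge (Cadd (f w) c) c).
    replace (Csub (Cadd (f w) c) c) with (f w) in H0 by ring. lra.
  - pose proof (Cmod_sub_ge (f w) (Copp c)).
    replace (Csub (f w) (Copp c)) with (Cadd (f w) c) in H0 by ring. rewrite Cmod_opp in H0. lra.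
Qed.

Lemma pole_mismatch (D : Cx -> Prop) (f g : Cx -> Cx) (z : Cx) :
  Copen D -> meromorphic D f -> meromorphic D g -> D z -> pole f z -> ~ pole g z ->
  exists z1, D z1 /\ ~ pole f z1 /\ ~ pole g z1 /\ f z1 <> g z1.
Proof.
  intros Dop Mf Mg Dz Pf Npg.
  destruct (near_and _ _ _ (mero_regular_near D g z Dop Mg Dz Npg)
              (Ccont_bounded g z (Cdiff_cont g z (mero_Cdiff D g z Mg Dz Npg)))) as [r1 [Hr1 H1]].
  destruct (Pf (Cmod (g z) + 1)) as [r2 [Hr2 H2]].
  destruct (proj2 Mf z Dz) as [r3 [Hr3 H3]].
  destruct (exists_near_neq z (Rmin r1 (Rmin r2 r3)) ltac:(repeat apply Rmin_glb_lt; auto)) as [w [N Hw]].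
  pose proof (Rlt_Rmin_l _ _ _ Hw) as W1. pose proof (Rlt_Rmin_r _ _ _ Hw) as W23.
  pose proof (Rlt_Rmin_l _ _ _ W23) as W2. pose proof (Rlt_Rmin_r _ _ _ W23) as W3.
  destruct (H1 w W1) as [[Dw [Npw _]] Hb]. exists w. repeat split; auto.
  intro E. specialize (H2 w N W2). rewrite E in H2. lra.
Qed.

Lemma exists_regular_point_neq (D : Cx -> Prop) (f g : Cx -> Cx) :
  Copen D -> meromorphic D f -> meromorphic D g -> ~ mero_eq D f g ->
  exists z1, D z1 /\ ~ pole f z1 /\ ~ pole g z1 /\ f z1 <> g z1.
Proof.
  intros Dop Mf Mg NE. apply not_all_ex_not in NE as [z Hz]. apply imply_to_and in Hz as [Dz Hz].
  destruct (classic (pole f z)) as [Pf|Npf], (classic (pole g z)) as [Pg|Npg].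
  - exfalso. apply Hz. split; [tauto|]. intros C; contradiction.
  - apply pole_mismatch with z; auto.
  - destruct (pole_mismatch D g f z Dop Mg Mf Dz Pg Npf) as [w [A [B [C E]]]].
    exists w. repeat split; auto.
  - exists z. repeat split; auto. intro E. apply Hz. split; [tauto|]. auto.
Qed.

Section Shifted_phases.
Variables (D : Cx -> Prop) (f g : Cx -> Cx) (c : Cx).
Hypothesis HD : Cdomain D.
Hypotheses (Mf : meromorphic D f) (Mg : meromorphic D g).
Hypotheses (Ncf : nonconstant_on D f) (Ncg : nonconstant_on D g).
Hypothesis Sp : same_phase D f g.
Hypothesis Spc : same_phase D (Cshift f c) (Cshift g c).
Hypothesis Nc : c <> C0.

Lemma cross_zero_of_phases (w : Cx) : D w -> ~ pole f w -> ~ pole g w -> f w <> g w ->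
  f w <> C0 -> g w <> C0 -> Cadd (f w) c <> C0 -> Cadd (g w) c <> C0 -> cross (f w) c = 0.
Proof.
  intros Dw Pf Pg Nfg N1 N2 N3 N4. apply (same_dir_shift_cross_zero (f w) (g w) c); auto.
  - apply (Sp w); auto.
  - rewrite <- !phase_shift. apply Spc; auto; rewrite pole_shift; auto.
Qed.

Lemma values_off_line (w : Cx) : D w -> ~ pole f w -> ~ pole g w -> f w <> g w ->
  cross (f w) c <> 0 -> g w = C0 \/ g w = Copp c.
Proof.
  intros Dw Pf Pg Nfg Cr.
  assert (f w <> C0) by (intros E; apply Cr; rewrite E; unfold cross, C0; simpl; ring).
  assert (Cadd (f w) c <> C0).
  { intros E. apply Cr. replace (f w) with (Copp c) by (replace (f w) with (Csub (Cadd (f w) c) c) by ring;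
      rewrite E; ring). unfold cross, Copp; simpl; ring. }
  destruct (Cx_dec (g w) C0) as [|N2]; auto. destruct (Cx_dec (Cadd (g w) c) C0) as [E|N4].
  - right. replace (g w) with (Csub (Cadd (g w) c) c) by ring. rewrite E. ring.
  - exfalso. apply Cr, cross_zero_of_phases; auto.
Qed.

Theorem shifted_phases_equal_mero_eq : mero_eq D f g.
Proof.
  apply NNPP. intros NE. pose proof HD as [Dop _].
  destruct (exists_regular_point_neq D f g Dop Mf Mg NE) as [z1 [Dz1 [Npf [Npg Nfg]]]].
  assert (Hgood := near_and _ _ _ (near_and _ _ _ (mero_regular_near D f z1 Dop Mf Dz1 Npf)
                                              (mero_regular_near D g z1 Dop Mg Dz1 Npg))
                     (Ccont_neq (fun w => Csub (f w) (g w)) z1 C0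
                        (Ccont_sub _ _ _ (Cdiff_cont _ _ (mero_Cdiff D f z1 Mf Dz1 Npf))
                                         (Cdiff_cont _ _ (mero_Cdiff D g z1 Mg Dz1 Npg)))
                        (Csub_neq0 _ _ Nfg))).
  destruct Hgood as [rho [Hrho Hgood]].
  assert (Good : forall w, Cmod (Csub w z1) < rho -> D w /\ ~ pole f w /\ Cdifferentiable f w /\
            ~ pole g w /\ Cdifferentiable g w /\ f w <> g w).
  { intros w Hw. destruct (Hgood w Hw) as [[[? [? ?]] [? [? ?]]] Ne].
    repeat split; auto. intros E. apply Ne. rewrite E. ring. }
  destruct (classic (forall w, Cmod (Csub w z1) < rho -> cross (f w) c = 0)) as [OnLine|OffLine].
  - apply Ncf. exists (f z1). apply (mero_identity D f (f z1) z1); auto.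
    exists rho. split; auto. apply (const_on_ball_of_cross_zero f c z1 rho Nc).
    intros w Hw. split; [apply Good | apply OnLine]; auto.
  - apply not_all_ex_not in OffLine as [w0 Hw0]. apply imply_to_and in Hw0 as [Hw0 Ncr].
    destruct (Good w0 Hw0) as [_ [_ [Cf0 [_ [Cg0 _]]]]].
    assert (Hv : near w0 (fun w => g w = C0 \/ g w = Copp c)).
    { refine (near_mono _ _ _ _ (near_and _ _ _ (cross_near_neq0 f w0 c (Cdiff_cont _ _ Cf0) Ncr)
                 (near_in_ball z1 w0 rho _ Good Hw0))).
      intros w [Cr [? [? [_ [? [_ ?]]]]]]. apply values_off_line; auto. }
    apply Ncg. exists (g w0). apply (mero_identity D g (g w0) w0); auto; [apply Good; auto|].
    apply (Ccont_two_values_locally_const g w0 C0 (Copp c) (Cdiff_cont _ _ Cg0)); auto.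
    intros E. apply Nc. replace c with (Copp (Copp c)) by ring. rewrite <- E. ring.
Qed.

End Shifted_phases.

Theorem mainTheorem2 (D : Cx -> Prop) (f g : Cx -> Cx) :
  Cdomain D ->
  meromorphic D f -> meromorphic D g ->
  nonconstant_on D f -> nonconstant_on D g ->
  same_phase D f g ->
  (~ mero_eq D f g <-> exists c : Cx, c <> C0 /\ ~ same_phase D (Cshift f c) (Cshift g c)) /\
  ((exists c : Cx, c <> C0 /\ ~ same_phase D (Cshift f c) (Cshift g c)) <->
   (forall c : Cx, c <> C0 -> ~ same_phase D (Cshift f c) (Cshift g c))).
Proof.
  intros HD Mf Mg Ncf Ncg Sp.
  assert (Ex_of_neq : ~ mero_eq D f g -> exists c, c <> C0 /\ ~ same_phase D (Cshift f c) (Cshift g c)).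
  { intros NE. destruct (exists_regular_point_neq D f g (proj1 HD) Mf Mg NE) as [z1 [Dz1 [Npf [Npg Nfg]]]].
    destruct (exists_shift_separating_dirs (f z1) (g z1) Nfg) as [c [Nc [Na [Nb Np]]]].
    exists c. split; auto. intros S. apply Np. rewrite <- !phase_shift.
    apply S; auto; rewrite pole_shift; auto. }
  assert (All_of_neq : ~ mero_eq D f g -> forall c, c <> C0 -> ~ same_phase D (Cshift f c) (Cshift g c))
    by (intros NE c Nc Spc; apply NE; eapply shifted_phases_equal_mero_eq; eauto).
  assert (Neq_of_ex : (exists c, c <> C0 /\ ~ same_phase D (Cshift f c) (Cshift g c)) -> ~ mero_eq D f g).
  { intros [c [Nc Nsp]] Heq. apply Nsp. intros z Dz Np1 _ _ _.
    rewrite !phase_shift. destruct (Heq z Dz) as [_ E]. rewrite E; auto. rewrite <- (pole_shift f c); auto. }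
  split; split.
  - exact Ex_of_neq.
  - exact Neq_of_ex.
  - intros H. exact (All_of_neq (Neq_of_ex H)).
  - intros H. exists Cone. split; [apply Cone_neq_C0 | apply H, Cone_neq_C0].
Qed.
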